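(* Let $\vartheta$ be a primitive semi-compatible random substitution on $\mathcal A=\{a_1,\dots,a_n\}$ with topological entropy $s$ and lower/upper inflation word entropies $\underline s_i^I$, $\overline s_i^I$. Then for all $1\leqslant i\leqslant n$ and all $m\in\mathbb N$, \[ \frac{1}{\lambda^m}\bm q_m^\intercal\bm R\;\leqslant\;\underline s_i^I\;\leqslant\;\overline s_i^I\;\leqslant\;s\;\leqslant\;\frac{1}{\lambda^m-1}\bm q_m^\intercal\bm R . \] In particular the limit $s^I=\lim_{m\to\infty}\frac{1}{\ell_{m,i}}\log(\#\vartheta^m(a_i))$ exists, is independent of $i$, and \[ s=s^I=\lim_{m\to\infty}\frac{1}{\lambda^m}\bm q_m^\intercal\bm R=\sup_{m\in\mathbb N}\frac{1}{\lambda^m}\bm q_m^\intercal\bm R . \]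
   Context: Let $\mathcal A=\{a_1,\dots,a_n\}$ be a finite alphabet, $\mathcal A^+$ the finite non-empty words over $\mathcal A$. A random substitution is a map $\vartheta$ from $\mathcal A$ to finite non-empty subsets of $\mathcal A^+$, extended to words by $\vartheta(u_1\cdots u_m)=\{w_1\cdots w_m: w_k\in\vartheta(u_k)\}$ and to sets of words by unions; powers $\vartheta^m$ are compositions. $|u|_a$ is the number of occurrences of letter $a$ in $u$; $\Phi(u)=(|u|_{a_1},\dots,|u|_{a_n})^\intercal$. $\vartheta$ is semi-compatible if for each $a$ all words in $\vartheta(a)$ have the same $\Phi$; then all words in $\vartheta^m(a_i)$ have a common length $\ell_{m,i}$. Substitution matrix $M_{ij}=|u|_{a_i}$, $u\in\vartheta(a_j)$; primitive means $M$ primitive, with Perron–Frobenius eigenvalue $\lambda$ and right PF eigenvector $\bm R$, $\|\bm R\|_1=1$. $q_{m,i}=\log\#\vartheta^m(a_i)$, $\bm q_m=(q_{m,1},\dots,q_{m,n})^\intercal$. $\underline s_i^I=\liminf_{m\to\infty}q_{m,i}/\ell_{m,i}$, $\overline s_i^I=\limsup_{m\to\infty}q_{m,i}/\ell_{m,i}$. The language $\mathcal L$ is the set of all subwords of words in $\vartheta^m(a)$, $a\in\mathcal A$, $m\in\mathbb N$; $\mathcal L_\ell$ its words of length $\ell$; topological entropy $s=\lim_{\ell\to\infty}\frac1\ell\log\#\mathcal L_\ell$. *)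

From Stdlib Require Import Reals Lra Lia Arith List.
Import ListNotations.
Open Scope R_scope.

(* Alphabet A = {a_1,...,a_n} is encoded as the letters 0,...,n-1 (nat).  A random substitution is
   theta : nat -> list (list nat), theta a listing the (finite) set theta(a). *)

Definition word := list nat.

(* theta(u_1...u_m) = { w_1...w_m : w_k in theta(u_k) }  (as a list, possibly
   with repetitions; sets are identified with the set of list elements). *)
Fixpoint subst_word (theta : nat -> list word) (u : word) : list word :=
  match u with
  | [] => [ [] ]
  | x :: u' => flat_map (fun v => map (fun w => v ++ w) (subst_word theta u'))
                        (theta x)
  end.

Definition subst_set (theta : nat -> list word) (S : list word) : list word :=
  flat_map (subst_word theta) S.

Definition subst_pow (theta : nat -> list word) (m : nat) (a : nat) : list word :=
  Nat.iter m (subst_set theta) [ [a] ].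

Definition card_words (l : list word) : nat :=
  length (nodup (list_eq_dec Nat.eq_dec) l).

Definition occ (u : word) (b : nat) : nat := count_occ Nat.eq_dec u b.

Definition is_random_subst (n : nat) (theta : nat -> list word) : Prop :=
  forall a, (a < n)%nat ->
    theta a <> [] /\
    forall w, In w (theta a) -> w <> [] /\ forall x, In x w -> (x < n)%nat.

Definition semi_compatible (n : nat) (theta : nat -> list word) : Prop :=
  forall a, (a < n)%nat -> forall u v, In u (theta a) -> In v (theta a) ->
    forall b, occ u b = occ v b.

(* substitution matrix M_{ba} = |u|_b, u in theta(a) (well defined by
   semi-compatibility) *)
Definition subst_matrix (theta : nat -> list word) (b a : nat) : nat :=
  occ (hd [] (theta a)) b.

Definition nsum (n : nat) (f : nat -> nat) : nat :=
  fold_right Nat.add 0%nat (map f (seq 0 n)).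

Definition matmul (n : nat) (A B : nat -> nat -> nat) : nat -> nat -> nat :=
  fun i j => nsum n (fun k => (A i k * B k j)%nat).

Fixpoint matpow (n : nat) (A : nat -> nat -> nat) (k : nat) : nat -> nat -> nat :=
  match k with
  | O => fun i j => if Nat.eqb i j then 1%nat else 0%nat
  | S k' => matmul n A (matpow n A k')
  end.

Definition primitive_mat (n : nat) (A : nat -> nat -> nat) : Prop :=
  exists k, (1 <= k)%nat /\ forall i j, (i < n)%nat -> (j < n)%nat ->
    (0 < matpow n A k i j)%nat.

Definition rsum (n : nat) (f : nat -> R) : R :=
  fold_right Rplus 0 (map f (seq 0 n)).

(* lambda is the Perron-Frobenius eigenvalue and R the right PF eigenvector
   normalised by ||R||_1 = 1: R is a strictly positive right eigenvector for
   lambda (for a primitive matrix this characterises the PF pair uniquely). *)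
Definition PF_pair (n : nat) (M : nat -> nat -> nat) (lam : R) (Rv : nat -> R)
  : Prop :=
  (forall i, (i < n)%nat -> 0 < Rv i) /\
  rsum n Rv = 1 /\
  forall b, (b < n)%nat -> rsum n (fun a => INR (M b a) * Rv a) = lam * Rv b.

(* ell_{m,i} : common length of the words of theta^m(a_i) *)
Definition ell (theta : nat -> list word) (m i : nat) : nat :=
  length (hd [] (subst_pow theta m i)).

Definition q (theta : nat -> list word) (m i : nat) : R :=
  ln (INR (card_words (subst_pow theta m i))).

Definition qR (n : nat) (theta : nat -> list word) (Rv : nat -> R) (m : nat) : R :=
  rsum n (fun i => q theta m i * Rv i).

Definition subword (u w : word) : Prop := exists p s, w = p ++ u ++ s.

Definition lang (n : nat) (theta : nat -> list word) (l : nat) (u : word) : Prop :=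
  length u = l /\
  exists m a w, (a < n)%nat /\ In w (subst_pow theta m a) /\ subword u w.

Definition has_card (P : word -> Prop) (k : nat) : Prop :=
  exists l, NoDup l /\ (forall w, In w l <-> P w) /\ length l = k.

Definition top_entropy (n : nat) (theta : nat -> list word) (s : R) : Prop :=
  exists c : nat -> nat, (forall l, has_card (lang n theta l) (c l)) /\
    Un_cv (fun l => ln (INR (c l)) / INR l) s.

Definition is_liminf (u : nat -> R) (x : R) : Prop :=
  forall eps, 0 < eps ->
    (exists N, forall m, (N <= m)%nat -> x - eps < u m) /\
    (forall N, exists m, (N <= m)%nat /\ u m < x + eps).

Definition is_limsup (u : nat -> R) (x : R) : Prop :=
  forall eps, 0 < eps ->
    (exists N, forall m, (N <= m)%nat -> u m < x + eps) /\
    (forall N, exists m, (N <= m)%nat /\ x - eps < u m).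

Definition infl_seq (theta : nat -> list word) (i : nat) : nat -> R :=
  fun m => q theta m i / INR (ell theta m i).

(* Since all words of [theta^m(a)] have the same length, substitutions at different
   positions are independent, so [log #theta^m(u) = sum_c |u|_c q_{m,c}].  Hence
   [lam^k q_m.R <= q_{m+k}.R <= q_k.R + lam^k q_m.R]: the sequence [q_m.R / lam^m]
   increases and stays below [q_m.R / (lam^m - 1)].  Likewise the minimum over [i] of
   [q_{m,i} / ell_{m,i}] increases, and primitivity makes the spread between minimum and
   maximum contract, so all these ratios and [q_m.R / lam^m] share one limit [gam].
   Since [theta^m(a_i)] consists of legal words of length [ell_{m,i}], [gam <= s]; and
   since every long legal word is a factor of a level-[N] inflation word of about the
   same length, [#L_l <= poly(l) n^(l / min ell_N) exp(l max_i q_{N,i} / ell_{N,i})],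
   whence [s <= gam].  The degenerate case [lam = 1] has all entropies [0]. *)

From Stdlib Require Import Reals Lra Lia Arith List.
Import ListNotations.
Open Scope R_scope.

Notation deq := (list_eq_dec Nat.eq_dec).

Lemma card_words_incl (l1 l2 : list word) :
  incl l1 l2 -> (card_words l1 <= card_words l2)%nat.
Proof.
  intros H; unfold card_words. apply NoDup_incl_length; [apply NoDup_nodup|].
  intros x Hx. apply nodup_In, H, (nodup_In deq), Hx.
Qed.

Lemma card_words_ext (l1 l2 : list word) :
  (forall x, In x l1 <-> In x l2) -> card_words l1 = card_words l2.
Proof.
  intros H. apply Nat.le_antisymm; apply card_words_incl; intros x; apply H.
Qed.

Lemma length_nodup_le {A} dec (l : list A) : (length (nodup dec l) <= length l)%nat.
Proof.
  induction l as [|x l IH]; simpl; [lia|]. destruct (in_dec dec x l); simpl; lia.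
Qed.

Lemma card_words_NoDup (l : list word) : NoDup l -> card_words l = length l.
Proof. intros H; unfold card_words; rewrite nodup_fixed_point; auto. Qed.

Lemma card_words_pos (l : list word) x : In x l -> (1 <= card_words l)%nat.
Proof.
  intros H. unfold card_words. apply (nodup_In deq) in H.
  destruct (nodup deq l); [destruct H|simpl; lia].
Qed.

Lemma card_words_le1 (l : list word) : (forall x y, In x l -> In y l -> x = y) ->
  (card_words l <= 1)%nat.
Proof.
  intros H. unfold card_words.
  assert (Hn : NoDup (nodup deq l)) by apply NoDup_nodup.
  destruct (nodup deq l) as [|a [|b t]] eqn:E; simpl; try lia.
  exfalso. inversion Hn; subst. apply H2. left. symmetry. apply H.
  - apply (nodup_In deq). rewrite E; simpl; auto.
  - apply (nodup_In deq). rewrite E; simpl; auto.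
Qed.

Lemma app_inj_length (x x' y y' : word) :
  length x = length x' -> x ++ y = x' ++ y' -> x = x' /\ y = y'.
Proof.
  revert x'; induction x as [|a x IH]; intros [|a' x'] Hl He; simpl in *; try lia; auto.
  injection He as -> He. destruct (IH x') as [-> ->]; auto.
Qed.

Lemma length_flat_map_le {A B} (f : A -> list B) (l : list A) k :
  (forall x, In x l -> (length (f x) <= k)%nat) -> (length (flat_map f l) <= length l * k)%nat.
Proof.
  induction l as [|a l IH]; intros H; simpl; auto.
  rewrite length_app.
  assert (length (flat_map f l) <= length l * k)%nat by (apply IH; intros; apply H; simpl; auto).
  specialize (H a (or_introl eq_refl)). lia.
Qed.

Lemma length_flat_map_leR {A B} (f : A -> list B) (l : list A) (k : R) :
  (forall x, In x l -> INR (length (f x)) <= k) ->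
  INR (length (flat_map f l)) <= INR (length l) * k.
Proof.
  induction l as [|a l IH]; intros H.
  - simpl; lra.
  - change (flat_map f (a :: l)) with (f a ++ flat_map f l).
    rewrite length_app, plus_INR. change (length (a :: l)) with (S (length l)). rewrite S_INR.
    assert (H1 := H a (or_introl eq_refl)).
    assert (INR (length (flat_map f l)) <= INR (length l) * k)
      by (apply IH; intros; apply H; simpl; auto). lra.
Qed.

(* Concatenation is injective on [A x B] because all words of [A] have the same length. *)
Lemma card_words_concat (A B C : list word) :
  (forall w, In w C <-> exists w1 w2, w = w1 ++ w2 /\ In w1 A /\ In w2 B) ->
  (forall x y, In x A -> In y A -> length x = length y) ->
  card_words C = (card_words A * card_words B)%nat.
Proof.
  intros HC HA.
  set (A' := nodup deq A). set (B' := nodup deq B).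
  set (L := flat_map (fun x => map (fun y => x ++ y) B') A').
  assert (E : card_words C = card_words L).
  { apply card_words_ext. intros w. rewrite HC. unfold L. rewrite in_flat_map. split.
    - intros (w1 & w2 & -> & H1 & H2). exists w1. split; [apply nodup_In; auto|].
      apply in_map. apply nodup_In; auto.
    - intros (x & Hx & Hw). apply in_map_iff in Hw. destruct Hw as (y & <- & Hy).
      exists x, y. split; auto. split; apply (nodup_In deq); auto. }
  assert (HA' : forall x y, In x A' -> In y A' -> length x = length y).
  { intros x y Hx Hy. apply HA; apply (nodup_In deq); auto. }
  assert (NA : NoDup A') by apply NoDup_nodup.
  assert (NB : NoDup B') by apply NoDup_nodup.
  assert (ND : NoDup L).
  { unfold L. clearbody A' B'. clear -HA' NA NB.
    induction A' as [|a A' IH]; simpl; [constructor|].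
    inversion NA; subst. apply NoDup_app.
    - apply NoDup_map_NoDup_ForallPairs; auto.
      intros y1 y2 _ _ H. apply app_inv_head in H; auto.
    - apply IH; auto. intros; apply HA'; simpl; auto.
    - intros z Hz1 Hz2. apply in_map_iff in Hz1. destruct Hz1 as (y & <- & Hy).
      apply in_flat_map in Hz2. destruct Hz2 as (x & Hx & Hz). apply in_map_iff in Hz.
      destruct Hz as (y' & Heq & Hy').
      destruct (app_inj_length x a y' y) as [-> _]; auto.
      apply HA'; simpl; auto. }
  rewrite E, card_words_NoDup by auto. unfold L.
  rewrite (flat_map_constant_length (c := length B')); [reflexivity|].
  intros; apply length_map.
Qed.

Lemma card_words_bind_le (X S : list word) (F : word -> list word) (k : nat) :
  (forall w, In w X <-> exists v, In v S /\ In w (F v)) ->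
  (forall v, In v S -> (card_words (F v) <= k)%nat) ->
  (card_words X <= card_words S * k)%nat.
Proof.
  intros HX HF.
  set (L := flat_map (fun v => nodup deq (F v)) (nodup deq S)).
  apply Nat.le_trans with (card_words L).
  { apply card_words_incl. intros w Hw. apply HX in Hw. destruct Hw as (v & Hv & Hw).
    unfold L. apply in_flat_map. exists v. split; apply nodup_In; auto. }
  apply Nat.le_trans with (length L); [apply length_nodup_le|].
  unfold L, card_words. apply length_flat_map_le.
  intros v Hv. apply HF. apply (nodup_In deq); auto.
Qed.

Lemma fold_right_add_shift (l : list nat) c :
  fold_right Nat.add c l = (fold_right Nat.add 0 l + c)%nat.
Proof. induction l; simpl; lia. Qed.

Lemma nsum_S n f : nsum (S n) f = (nsum n f + f n)%nat.
Proof.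
  unfold nsum. rewrite seq_S, map_app, fold_right_app. simpl.
  rewrite fold_right_add_shift. lia.
Qed.

Lemma nsum_ext n f g : (forall i, (i < n)%nat -> f i = g i) -> nsum n f = nsum n g.
Proof. induction n; intros H; auto. rewrite !nsum_S, IHn, H; auto. Qed.

Lemma nsum_zero n : nsum n (fun _ => 0%nat) = 0%nat.
Proof. induction n; auto. rewrite nsum_S, IHn. auto. Qed.

Lemma nsum_add n f g : nsum n (fun i => f i + g i)%nat = (nsum n f + nsum n g)%nat.
Proof. induction n; auto. rewrite !nsum_S, IHn. lia. Qed.

Lemma nsum_mul_l n c f : nsum n (fun i => c * f i)%nat = (c * nsum n f)%nat.
Proof. induction n; simpl; auto. rewrite !nsum_S, IHn. lia. Qed.

Lemma nsum_exchange n m f :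
  nsum n (fun i => nsum m (fun j => f i j)) = nsum m (fun j => nsum n (fun i => f i j)).
Proof.
  induction n.
  - symmetry. apply nsum_zero.
  - rewrite nsum_S, IHn, <- nsum_add. apply nsum_ext. intros. rewrite nsum_S. auto.
Qed.

Lemma nsum_delta n x f : (x < n)%nat ->
  nsum n (fun c => (if Nat.eqb x c then 1 else 0) * f c)%nat = f x.
Proof.
  induction n; intros H; [lia|]. rewrite nsum_S.
  destruct (Nat.eq_dec x n).
  - subst. rewrite Nat.eqb_refl, (nsum_ext _ _ (fun _ => 0%nat)), nsum_zero; [lia|].
    intros i Hi. destruct (Nat.eqb_spec n i); lia.
  - rewrite IHn by lia. destruct (Nat.eqb_spec x n); lia.
Qed.

Lemma nsum_le n f g : (forall i, (i < n)%nat -> (f i <= g i)%nat) -> (nsum n f <= nsum n g)%nat.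
Proof.
  induction n; intros H; auto. rewrite !nsum_S.
  specialize (IHn (fun i Hi => H i ltac:(lia))). specialize (H n ltac:(lia)). lia.
Qed.

Lemma nsum_term n f i : (i < n)%nat -> (f i <= nsum n f)%nat.
Proof.
  induction n; intros H; [lia|]. rewrite nsum_S.
  destruct (Nat.eq_dec i n); [subst; lia|]. specialize (IHn ltac:(lia)); lia.
Qed.

Lemma fold_right_Rplus_shift (l : list R) c :
  fold_right Rplus c l = fold_right Rplus 0 l + c.
Proof. induction l; simpl; lra. Qed.

Lemma rsum_S n f : rsum (S n) f = rsum n f + f n.
Proof.
  unfold rsum. rewrite seq_S, map_app, fold_right_app. simpl.
  rewrite fold_right_Rplus_shift. lra.
Qed.

Lemma rsum_ext n f g : (forall i, (i < n)%nat -> f i = g i) -> rsum n f = rsum n g.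
Proof. induction n; intros H; auto. rewrite !rsum_S, IHn, H; auto. Qed.

Lemma rsum_plus n f g : rsum n (fun i => f i + g i) = rsum n f + rsum n g.
Proof. induction n; [unfold rsum; simpl; lra|]. rewrite !rsum_S, IHn. lra. Qed.

Lemma rsum_minus n f g : rsum n (fun i => f i - g i) = rsum n f - rsum n g.
Proof. induction n; [unfold rsum; simpl; lra|]. rewrite !rsum_S, IHn. lra. Qed.

Lemma rsum_scal n c f : rsum n (fun i => c * f i) = c * rsum n f.
Proof. induction n; [unfold rsum; simpl; lra|]. rewrite !rsum_S, IHn. lra. Qed.

Lemma rsum_const n c : rsum n (fun _ => c) = INR n * c.
Proof. induction n; [unfold rsum; simpl; lra|]. rewrite rsum_S, IHn, S_INR. lra. Qed.

Lemma rsum_exchange n m f :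
  rsum n (fun i => rsum m (fun j => f i j)) = rsum m (fun j => rsum n (fun i => f i j)).
Proof.
  induction n.
  - symmetry. rewrite (rsum_ext m _ (fun _ => 0)) by reflexivity.
    rewrite rsum_const. unfold rsum; simpl; ring.
  - rewrite rsum_S, IHn, <- rsum_plus. apply rsum_ext. intros. rewrite rsum_S. auto.
Qed.

Lemma rsum_le n f g : (forall i, (i < n)%nat -> f i <= g i) -> rsum n f <= rsum n g.
Proof.
  induction n; intros H; [unfold rsum; simpl; lra|]. rewrite !rsum_S.
  specialize (IHn (fun i Hi => H i ltac:(lia))). specialize (H n ltac:(lia)). lra.
Qed.

Lemma rsum_nonneg n f : (forall i, (i < n)%nat -> 0 <= f i) -> 0 <= rsum n f.
Proof.
  intros H. replace 0 with (INR n * 0) by ring. rewrite <- rsum_const. apply rsum_le. auto.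
Qed.

Lemma rsum_term n f i : (forall j, (j < n)%nat -> 0 <= f j) -> (i < n)%nat -> f i <= rsum n f.
Proof.
  induction n; intros H Hi; [lia|]. rewrite rsum_S.
  assert (0 <= rsum n f) by (apply rsum_nonneg; intros; apply H; lia).
  destruct (Nat.eq_dec i n); [subst; lra|].
  specialize (IHn (fun j Hj => H j ltac:(lia)) ltac:(lia)). specialize (H n ltac:(lia)). lra.
Qed.

Lemma rsum_delta n x f : (x < n)%nat ->
  rsum n (fun c => INR (if Nat.eqb x c then 1 else 0) * f c) = f x.
Proof.
  induction n; intros H; [lia|]. rewrite rsum_S.
  destruct (Nat.eq_dec x n).
  - subst. rewrite Nat.eqb_refl, (rsum_ext _ _ (fun _ => 0)), rsum_const; [simpl; lra|].
    intros i Hi. destruct (Nat.eqb_spec n i); [lia|]. simpl; lra.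
  - rewrite IHn by lia. destruct (Nat.eqb_spec x n); [lia|]. simpl; lra.
Qed.

Lemma INR_nsum n f : INR (nsum n f) = rsum n (fun i => INR (f i)).
Proof. induction n; auto. rewrite nsum_S, rsum_S, plus_INR, IHn. auto. Qed.

Lemma Rdiv_nonneg a b : 0 <= a -> 0 < b -> 0 <= a / b.
Proof. intros. apply Rle_mult_inv_pos; auto. Qed.

Lemma le_epsilon_le x y : (forall eps, 0 < eps -> x <= y + eps) -> x <= y.
Proof.
  intros H. destruct (Rle_dec x y); auto. specialize (H ((x - y) / 2) ltac:(lra)). lra.
Qed.

Lemma pow_bernoulli x k : 1 <= x -> 1 + INR k * (x - 1) <= x ^ k.
Proof.
  intros Hx. induction k; [simpl; lra|]. rewrite S_INR. simpl.
  assert (1 <= x ^ k) by (pose proof (Rle_pow x 0 k Hx ltac:(lia)); simpl in H; lra).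
  nra.
Qed.

Lemma exp_le_compat x y : x <= y -> exp x <= exp y.
Proof. intros [H|<-]; [left; apply exp_increasing; auto|lra]. Qed.

Lemma ln_le x y : 0 < x -> x <= y -> ln x <= ln y.
Proof. intros H1 [H2|<-]; [left; apply ln_increasing; auto|lra]. Qed.

Lemma ln_nonneg x : 1 <= x -> 0 <= ln x.
Proof. intros H. rewrite <- ln_1. apply ln_le; lra. Qed.

Lemma ln_0 : ln 0 = 0.
Proof.
  unfold ln. destruct (Rlt_dec 0 0) as [h|h]; [exfalso; exact (Rlt_irrefl 0 h)|reflexivity].
Qed.

Lemma ln_lt_self x : 0 < x -> ln x < x.
Proof.
  intros H. apply exp_lt_inv. rewrite exp_ln by auto.
  destruct (Req_dec x 0); [lra|]. pose proof (exp_ineq1 x H0). lra.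
Qed.

(* [ln x = 2 ln (sqrt x) < 2 sqrt x <= eps x] as soon as [sqrt x >= 2 / eps]. *)
Lemma ln_le_eps_mul_eventually eps : 0 < eps ->
  exists X, 0 < X /\ forall x, X <= x -> ln x <= eps * x.
Proof.
  intros He. exists ((2 / eps) ^ 2 + 1). split; [pose proof (pow2_ge_0 (2 / eps)); lra|].
  intros x Hx.
  assert (H2e : 0 < 2 / eps) by (apply Rdiv_lt_0_compat; lra).
  assert (Hx0 : 0 < x) by (pose proof (pow2_ge_0 (2 / eps)); lra).
  assert (Hs : 0 < sqrt x) by (apply sqrt_lt_R0; auto).
  assert (Hsq : sqrt x * sqrt x = x) by (apply sqrt_sqrt; lra).
  assert (Hln : ln x = 2 * ln (sqrt x)).
  { rewrite <- Hsq at 1. rewrite ln_mult by auto. lra. }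
  assert (Hl2 : ln (sqrt x) < sqrt x) by (apply ln_lt_self; auto).
  assert (Hge : 2 / eps <= sqrt x).
  { rewrite <- (sqrt_pow2 (2 / eps)) by lra. apply sqrt_le_1_alt. lra. }
  assert (2 <= eps * sqrt x).
  { apply Rmult_le_compat_l with (r := eps) in Hge; [|lra].
    replace (eps * (2 / eps)) with 2 in Hge by (field; lra). lra. }
  rewrite Hln. rewrite <- Hsq at 2.
  assert (2 * sqrt x <= eps * sqrt x * sqrt x) by nra. nra.
Qed.

(* The seed [f 0] of the folds only matters when [n = 0]. *)
Definition rmin (n : nat) (f : nat -> R) : R := fold_right Rmin (f 0%nat) (map f (seq 0 n)).
Definition rmax (n : nat) (f : nat -> R) : R := fold_right Rmax (f 0%nat) (map f (seq 0 n)).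

Lemma rmin_le n f i : (i < n)%nat -> rmin n f <= f i.
Proof.
  intros H. assert (Hi : In i (seq 0 n)) by (apply in_seq; lia). clear H. unfold rmin.
  induction (seq 0 n) as [|x l IH]; [destruct Hi|]. simpl.
  destruct Hi as [->|Hi]; [apply Rmin_l|]. eapply Rle_trans; [apply Rmin_r|auto].
Qed.

Lemma rmax_ge n f i : (i < n)%nat -> f i <= rmax n f.
Proof.
  intros H. assert (Hi : In i (seq 0 n)) by (apply in_seq; lia). clear H. unfold rmax.
  induction (seq 0 n) as [|x l IH]; [destruct Hi|]. simpl.
  destruct Hi as [->|Hi]; [apply Rmax_l|]. eapply Rle_trans; [apply IH; auto|apply Rmax_r].
Qed.

Lemma rmin_attained n f : (1 <= n)%nat -> exists i, (i < n)%nat /\ rmin n f = f i.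
Proof.
  intros Hn. unfold rmin.
  assert (H : fold_right Rmin (f 0%nat) (map f (seq 0 n)) = f 0%nat \/
    exists i, In i (seq 0 n) /\ fold_right Rmin (f 0%nat) (map f (seq 0 n)) = f i).
  { induction (seq 0 n) as [|x l IH]; simpl; auto.
    destruct (Rle_dec (f x) (fold_right Rmin (f 0%nat) (map f l))).
    - rewrite Rmin_left by auto. right; exists x; simpl; auto.
    - rewrite Rmin_right by lra.
      destruct IH as [E|(i & Hi & E)]; [left; auto|right; exists i; simpl; auto]. }
  destruct H as [E|(i & Hi & E)]; [exists 0%nat; split; [lia|auto]|].
  exists i. apply in_seq in Hi. split; [lia|auto].
Qed.

Lemma rmax_attained n f : (1 <= n)%nat -> exists i, (i < n)%nat /\ rmax n f = f i.
Proof.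
  intros Hn. unfold rmax.
  assert (H : fold_right Rmax (f 0%nat) (map f (seq 0 n)) = f 0%nat \/
    exists i, In i (seq 0 n) /\ fold_right Rmax (f 0%nat) (map f (seq 0 n)) = f i).
  { induction (seq 0 n) as [|x l IH]; simpl; auto.
    destruct (Rle_dec (f x) (fold_right Rmax (f 0%nat) (map f l))).
    - rewrite Rmax_right by auto.
      destruct IH as [E|(i & Hi & E)]; [left; auto|right; exists i; simpl; auto].
    - rewrite Rmax_left by lra. right; exists x; simpl; auto. }
  destruct H as [E|(i & Hi & E)]; [exists 0%nat; split; [lia|auto]|].
  exists i. apply in_seq in Hi. split; [lia|auto].
Qed.

Lemma Un_cv_intro (u : nat -> R) l :
  (forall eps, 0 < eps -> exists N, forall k, (N <= k)%nat -> l - eps < u k < l + eps) ->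
  Un_cv u l.
Proof.
  intros H eps He. destruct (H eps He) as (N & HN). exists N. intros k Hk.
  unfold Rdist. specialize (HN k ltac:(lia)). apply Rabs_def1; lra.
Qed.

Lemma Un_cv_elim (u : nat -> R) l : Un_cv u l ->
  forall eps, 0 < eps -> exists N, forall k, (N <= k)%nat -> l - eps < u k < l + eps.
Proof.
  intros H eps He. destruct (H eps He) as (N & HN). exists N. intros k Hk.
  specialize (HN k ltac:(lia)). unfold Rdist in HN. apply Rabs_def2 in HN. lra.
Qed.

Lemma Un_cv_le_eventually (u : nat -> R) l x N0 :
  Un_cv u l -> (forall k, (N0 <= k)%nat -> u k <= x) -> l <= x.
Proof.
  intros H Hx. destruct (Rle_dec l x) as [|Hn]; auto. exfalso.
  destruct (Un_cv_elim u l H ((l - x) / 2) ltac:(lra)) as (N & HN).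
  specialize (HN (N + N0)%nat ltac:(lia)). specialize (Hx (N + N0)%nat ltac:(lia)). lra.
Qed.

Lemma Un_cv_ge_eventually (u : nat -> R) l x N0 :
  Un_cv u l -> (forall k, (N0 <= k)%nat -> x <= u k) -> x <= l.
Proof.
  intros H Hx. destruct (Rle_dec x l) as [|Hn]; auto. exfalso.
  destruct (Un_cv_elim u l H ((x - l) / 2) ltac:(lra)) as (N & HN).
  specialize (HN (N + N0)%nat ltac:(lia)). specialize (Hx (N + N0)%nat ltac:(lia)). lra.
Qed.

Lemma Un_cv_squeeze (lo x hi : nat -> R) l :
  Un_cv lo l -> Un_cv hi l -> (forall k, lo k <= x k <= hi k) -> Un_cv x l.
Proof.
  intros H1 H2 H. apply Un_cv_intro. intros eps He.
  destruct (Un_cv_elim _ _ H1 eps He) as (N & HN).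
  destruct (Un_cv_elim _ _ H2 eps He) as (M & HM).
  exists (N + M)%nat. intros k Hk. specialize (HN k ltac:(lia)). specialize (HM k ltac:(lia)).
  specialize (H k). lra.
Qed.

Lemma Un_cv_const x : Un_cv (fun _ => x) x.
Proof. apply Un_cv_intro. intros eps He. exists 0%nat. intros; lra. Qed.

Lemma Un_cv_ext (u v : nat -> R) l : (forall k, u k = v k) -> Un_cv u l -> Un_cv v l.
Proof.
  intros H Hu. apply Un_cv_intro. intros eps He.
  destruct (Un_cv_elim u l Hu eps He) as (N & HN). exists N. intros k Hk. rewrite <- H. auto.
Qed.

Lemma Un_cv_is_liminf (u : nat -> R) l : Un_cv u l -> is_liminf u l.
Proof.
  intros H eps He. destruct (Un_cv_elim u l H eps He) as (N & HN). split.
  - exists N. intros m Hm. apply HN; auto.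
  - intros M. exists (N + M)%nat. split; [lia|]. apply HN; lia.
Qed.

Lemma Un_cv_is_limsup (u : nat -> R) l : Un_cv u l -> is_limsup u l.
Proof.
  intros H eps He. destruct (Un_cv_elim u l H eps He) as (N & HN). split.
  - exists N. intros m Hm. apply HN; auto.
  - intros M. exists (N + M)%nat. split; [lia|]. apply HN; lia.
Qed.

Lemma occ_cons x u c : occ (x :: u) c = ((if Nat.eqb x c then 1 else 0) + occ u c)%nat.
Proof.
  unfold occ. destruct (Nat.eqb_spec x c).
  - subst. rewrite count_occ_cons_eq; auto.
  - rewrite count_occ_cons_neq; auto.
Qed.

Lemma occ_app u v c : occ (u ++ v) c = (occ u c + occ v c)%nat.
Proof. apply count_occ_app. Qed.

(* The bound of [length_factor_candidates_le] below, in logarithmic form. *)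
Lemma ln_count_bound (n Z Lmin : nat) (G : R) : (1 <= n)%nat -> (1 <= Lmin)%nat -> 0 <= G ->
  1 <= INR (S (Z / Lmin)) * INR n ^ (Z / Lmin) * (exp (G * INR Z) * INR (S Z)) /\
  ln (INR (S (Z / Lmin)) * INR n ^ (Z / Lmin) * (exp (G * INR Z) * INR (S Z)))
  <= 2 * ln (INR (S Z)) + INR Z * (ln (INR n) / INR Lmin + G).
Proof.
  intros Hn HL1 HG. set (R := (Z / Lmin)%nat).
  assert (HLm : 1 <= INR Lmin) by (apply (le_INR 1); auto).
  assert (HnR : 1 <= INR n) by (apply (le_INR 1); auto).
  assert (Hlnn : 0 <= ln (INR n)) by (apply ln_nonneg; auto).
  assert (HSR : 1 <= INR (S R)) by (apply (le_INR 1); lia).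
  assert (HSZ : 1 <= INR (S Z)) by (apply (le_INR 1); lia).
  assert (Hnp : 1 <= INR n ^ R)
    by (pose proof (Rle_pow (INR n) 0 R HnR ltac:(lia)); simpl in H; lra).
  assert (Hex : 1 <= exp (G * INR Z)).
  { rewrite <- exp_0. apply exp_le_compat. pose proof (pos_INR Z). nra. }
  split.
  { assert (1 <= exp (G * INR Z) * INR (S Z)) by nra.
    assert (1 <= INR (S R) * INR n ^ R) by nra. nra. }
  rewrite !ln_mult by (first [apply exp_pos | nra]). rewrite ln_pow, ln_exp by lra.
  assert (HRZ : (Lmin * R <= Z)%nat) by (apply Nat.Div0.mul_div_le).
  assert (HlnR : ln (INR (S R)) <= ln (INR (S Z))) by (apply ln_le; [lra|apply le_INR; nia]).
  assert (HlnnR : INR R * ln (INR n) <= INR Z * (ln (INR n) / INR Lmin)).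
  { assert (HRr : INR R * INR Lmin <= INR Z) by (rewrite <- mult_INR; apply le_INR; lia).
    apply Rmult_le_reg_r with (INR Lmin); [lra|].
    replace (INR Z * (ln (INR n) / INR Lmin) * INR Lmin) with (INR Z * ln (INR n))
      by (field; lra).
    nra. }
  lra.
Qed.

Section Substitution.
Variable n : nat.
Variable theta : nat -> list word.
Hypothesis Hrs : is_random_subst n theta.
Hypothesis Hsc : semi_compatible n theta.

(* [theta^m(u)]; note that [subst_pow theta m a] is convertible to [sub_iter m [a]]. *)
Definition sub_iter (m : nat) (u : word) : list word := Nat.iter m (subst_set theta) [u].
Definition on_alphabet (u : word) : Prop := forall x, In x u -> (x < n)%nat.
Definition Mpow := matpow n (subst_matrix theta).

Lemma on_alphabet_letter a : (a < n)%nat -> on_alphabet [a].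
Proof. intros Ha y [<-|[]]; auto. Qed.

Lemma on_alphabet_cons x u : on_alphabet (x :: u) -> (x < n)%nat /\ on_alphabet u.
Proof. intros H. split; [apply H; simpl; auto|intros y Hy; apply H; simpl; auto]. Qed.

Lemma nsum_occ_cons x u f : (x < n)%nat ->
  nsum n (fun c => occ (x :: u) c * f c)%nat = (f x + nsum n (fun c => occ u c * f c))%nat.
Proof.
  intros Hx.
  rewrite (nsum_ext _ _ (fun c => (if Nat.eqb x c then 1 else 0) * f c + occ u c * f c)%nat).
  - rewrite nsum_add, nsum_delta; auto.
  - intros c _. rewrite occ_cons. lia.
Qed.

Lemma rsum_occ_cons x u f : (x < n)%nat ->
  rsum n (fun c => INR (occ (x :: u) c) * f c) = f x + rsum n (fun c => INR (occ u c) * f c).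
Proof.
  intros Hx.
  rewrite (rsum_ext _ _ (fun c => INR (if Nat.eqb x c then 1 else 0) * f c + INR (occ u c) * f c)).
  - rewrite rsum_plus, rsum_delta; auto.
  - intros c _. rewrite occ_cons, plus_INR. lra.
Qed.

Lemma in_subst_word_app w u1 u2 : In w (subst_word theta (u1 ++ u2)) <->
  exists w1 w2, w = w1 ++ w2 /\ In w1 (subst_word theta u1) /\ In w2 (subst_word theta u2).
Proof.
  revert w; induction u1 as [|x u1 IH]; intros w; simpl.
  - split.
    + intros H. exists [], w. simpl; auto.
    + intros (w1 & w2 & -> & [<-|[]] & H2). auto.
  - rewrite in_flat_map. split.
    + intros (v & Hv & Hw). apply in_map_iff in Hw. destruct Hw as (w' & <- & Hw').
      apply IH in Hw'. destruct Hw' as (w1 & w2 & -> & H1 & H2).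
      exists (v ++ w1), w2. rewrite app_assoc. split; auto. split; auto.
      apply in_flat_map. exists v. split; auto. apply in_map; auto.
    + intros (w1 & w2 & -> & H1 & H2). apply in_flat_map in H1.
      destruct H1 as (v & Hv & H1). apply in_map_iff in H1. destruct H1 as (w1' & <- & H1).
      exists v. split; auto. rewrite <- app_assoc. apply in_map. apply IH. eauto.
Qed.

Lemma iter_subst_set_nil m : Nat.iter m (subst_set theta) [] = [].
Proof. induction m; simpl; auto. rewrite IHm. reflexivity. Qed.

Lemma iter_subst_set_app m S1 S2 : Nat.iter m (subst_set theta) (S1 ++ S2) =
  Nat.iter m (subst_set theta) S1 ++ Nat.iter m (subst_set theta) S2.
Proof. induction m; simpl; auto. rewrite IHm. unfold subst_set. apply flat_map_app. Qed.

Lemma in_iter_subst_set m S w :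
  In w (Nat.iter m (subst_set theta) S) <-> exists v, In v S /\ In w (sub_iter m v).
Proof.
  induction S as [|v S IH].
  - rewrite iter_subst_set_nil. simpl. split; [intros []|intros (v & [] & _)].
  - change (v :: S) with ([v] ++ S). rewrite iter_subst_set_app, in_app_iff, IH.
    unfold sub_iter. split.
    + intros [H|(v' & H1 & H2)]; [exists v; simpl; auto|exists v'; simpl; auto].
    + intros (v' & [<-|H1] & H2); auto. right; eauto.
Qed.

Lemma in_sub_iter_0 u w : In w (sub_iter 0 u) <-> w = u.
Proof. simpl. split; [intros [<-|[]]; auto| intros ->; auto]. Qed.

Lemma in_sub_iter_S m u w :
  In w (sub_iter (S m) u) <-> exists v, In v (sub_iter m u) /\ In w (subst_word theta v).
Proof. unfold sub_iter; simpl. unfold subst_set at 1. apply in_flat_map. Qed.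

Lemma in_sub_iter_app m u1 u2 w : In w (sub_iter m (u1 ++ u2)) <->
  exists w1 w2, w = w1 ++ w2 /\ In w1 (sub_iter m u1) /\ In w2 (sub_iter m u2).
Proof.
  revert w; induction m; intros w.
  - rewrite in_sub_iter_0. split.
    + intros ->. exists u1, u2. repeat split; apply in_sub_iter_0; auto.
    + intros (w1 & w2 & -> & H1 & H2).
      apply in_sub_iter_0 in H1; apply in_sub_iter_0 in H2. subst; auto.
  - rewrite in_sub_iter_S. split.
    + intros (v & Hv & Hw). apply IHm in Hv. destruct Hv as (v1 & v2 & -> & H1 & H2).
      apply in_subst_word_app in Hw. destruct Hw as (w1 & w2 & -> & H3 & H4).
      exists w1, w2. split; auto. split; apply in_sub_iter_S; eauto.
    + intros (w1 & w2 & -> & H1 & H2). apply in_sub_iter_S in H1; apply in_sub_iter_S in H2.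
      destruct H1 as (v1 & Hv1 & H1). destruct H2 as (v2 & Hv2 & H2).
      exists (v1 ++ v2). split. apply IHm; eauto. apply in_subst_word_app; eauto.
Qed.

Lemma in_sub_iter_cons m x u w : In w (sub_iter m (x :: u)) <->
  exists w1 w2, w = w1 ++ w2 /\ In w1 (sub_iter m [x]) /\ In w2 (sub_iter m u).
Proof. apply (in_sub_iter_app m [x] u). Qed.

Lemma in_sub_iter_nil m w : In w (sub_iter m []) <-> w = [].
Proof.
  revert w; induction m; intros w. apply in_sub_iter_0.
  rewrite in_sub_iter_S. split.
  - intros (v & Hv & Hw). apply IHm in Hv. subst. simpl in Hw. destruct Hw as [<-|[]]; auto.
  - intros ->. exists []. split. apply IHm; auto. simpl; auto.
Qed.

Lemma in_sub_iter_add m k u w :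
  In w (sub_iter (m + k) u) <-> exists v, In v (sub_iter k u) /\ In w (sub_iter m v).
Proof. unfold sub_iter at 1. rewrite Nat.iter_add. apply in_iter_subst_set. Qed.

Lemma in_sub_iter_1_letter x w : In w (sub_iter 1 [x]) <-> In w (theta x).
Proof.
  rewrite in_sub_iter_S. split.
  - intros (v & Hv & Hw). apply in_sub_iter_0 in Hv. subst. simpl in Hw.
    rewrite in_flat_map in Hw. destruct Hw as (v & Hv & [<-|[]]). rewrite app_nil_r; auto.
  - intros H. exists [x]. split. apply in_sub_iter_0; auto. simpl. apply in_flat_map.
    exists w. split; auto. rewrite app_nil_r; simpl; auto.
Qed.

Lemma sub_iter_1_on_alphabet v w : on_alphabet v -> In w (sub_iter 1 v) -> on_alphabet w.
Proof.
  revert w; induction v as [|x v IH]; intros w Hv Hw.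
  - apply in_sub_iter_nil in Hw. subst. intros y [].
  - apply in_sub_iter_cons in Hw. destruct Hw as (w1 & w2 & -> & H1 & H2).
    apply in_sub_iter_1_letter in H1. intros y Hy. apply in_app_iff in Hy. destruct Hy as [Hy|Hy].
    + assert (x < n)%nat by (apply Hv; simpl; auto).
      destruct (Hrs x H) as [_ Hw]. apply (Hw w1); auto.
    + apply (IH w2); auto. intros z Hz; apply Hv; simpl; auto.
Qed.

Lemma sub_iter_on_alphabet m v w : on_alphabet v -> In w (sub_iter m v) -> on_alphabet w.
Proof.
  revert v w; induction m; intros v w Hv Hw.
  - apply in_sub_iter_0 in Hw; subst; auto.
  - rewrite <- Nat.add_1_r in Hw. apply in_sub_iter_add in Hw. destruct Hw as (v' & H1 & H2).
    apply (IHm v'); auto. apply (sub_iter_1_on_alphabet v); auto.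
Qed.

Lemma sub_iter_1_nonempty v w : v <> [] -> on_alphabet v -> In w (sub_iter 1 v) -> w <> [].
Proof.
  destruct v as [|x v]; intros Hne Hv Hw; [congruence|].
  apply in_sub_iter_cons in Hw. destruct Hw as (w1 & w2 & -> & H1 & H2).
  apply in_sub_iter_1_letter in H1.
  assert (x < n)%nat by (apply Hv; simpl; auto).
  destruct (Hrs x H) as [_ Hw]. destruct (Hw w1 H1) as [Hne1 _].
  destruct w1; simpl; congruence.
Qed.

Lemma sub_iter_nonempty m v w : v <> [] -> on_alphabet v -> In w (sub_iter m v) -> w <> [].
Proof.
  revert v w; induction m; intros v w Hne Hv Hw.
  - apply in_sub_iter_0 in Hw; subst; auto.
  - rewrite <- Nat.add_1_r in Hw. apply in_sub_iter_add in Hw. destruct Hw as (v' & H1 & H2).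
    apply (IHm v'); auto.
    + apply (sub_iter_1_nonempty v); auto.
    + apply (sub_iter_1_on_alphabet v); auto.
Qed.

Lemma sub_iter_1_inhabited v : on_alphabet v -> exists w, In w (sub_iter 1 v).
Proof.
  induction v as [|x v IH]; intros Hv.
  - exists []. apply in_sub_iter_nil; auto.
  - destruct IH as (w2 & H2). intros y Hy; apply Hv; simpl; auto.
    assert (x < n)%nat by (apply Hv; simpl; auto).
    destruct (Hrs x H) as [Hne _]. destruct (theta x) as [|w1 t] eqn:E; [congruence|].
    exists (w1 ++ w2). apply in_sub_iter_cons. exists w1, w2. split; auto. split; auto.
    apply in_sub_iter_1_letter. rewrite E; simpl; auto.
Qed.

Lemma sub_iter_inhabited m v : on_alphabet v -> exists w, In w (sub_iter m v).
Proof.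
  revert v; induction m; intros v Hv.
  - exists v. apply in_sub_iter_0; auto.
  - destruct (sub_iter_1_inhabited v Hv) as (v' & Hv').
    destruct (IHm v') as (w & Hw). apply (sub_iter_1_on_alphabet v); auto.
    exists w. rewrite <- Nat.add_1_r. apply in_sub_iter_add. eauto.
Qed.

Lemma length_occ_sum w : on_alphabet w -> length w = nsum n (fun b => occ w b).
Proof.
  induction w as [|x w IH]; intros Hw.
  - symmetry; apply nsum_zero.
  - apply on_alphabet_cons in Hw as [Hx Hw].
    rewrite (nsum_ext _ _ (fun b => occ (x :: w) b * 1)%nat), nsum_occ_cons by (auto; intros; lia).
    rewrite (nsum_ext _ _ (fun b => occ w b)), <- IH by (auto; intros; lia). reflexivity.
Qed.

Lemma occ_subst_word u w b : on_alphabet u -> In w (subst_word theta u) ->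
  occ w b = nsum n (fun c => occ u c * subst_matrix theta b c)%nat.
Proof.
  revert w; induction u as [|x u IH]; intros w Hu Hw.
  - simpl in Hw. destruct Hw as [<-|[]]. symmetry; apply nsum_zero.
  - change (x :: u) with ([x] ++ u) in Hw. apply in_subst_word_app in Hw.
    destruct Hw as (w1 & w2 & -> & H1 & H2).
    assert (Hx : (x < n)%nat) by (apply Hu; simpl; auto).
    rewrite occ_app, (IH w2), nsum_occ_cons by (auto; intros y Hy; apply Hu; simpl; auto).
    f_equal. simpl in H1. rewrite in_flat_map in H1. destruct H1 as (v & Hv & [<-|[]]).
    rewrite app_nil_r. unfold subst_matrix.
    destruct (Hrs x Hx) as [Hne _]. destruct (theta x) as [|h t] eqn:E; [congruence|].
    simpl. apply (Hsc x Hx); [rewrite E; auto | rewrite E; simpl; auto].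
Qed.

Lemma occ_sub_iter m v w b : on_alphabet v -> In w (sub_iter m v) ->
  occ w b = nsum n (fun c => occ v c * Mpow m b c)%nat.
Proof.
  revert w b; induction m; intros w b Hv Hw.
  - apply in_sub_iter_0 in Hw. subst. unfold Mpow; cbn [matpow].
    rewrite (nsum_ext n _ (fun c => ((if Nat.eqb b c then 1 else 0) * occ v c)%nat))
      by (intros; lia).
    destruct (le_lt_dec n b).
    + rewrite (nsum_ext _ _ (fun _ => 0%nat)).
      * assert (occ v b = 0%nat).
        { unfold occ. apply count_occ_not_In. intros Hb. apply Hv in Hb. lia. }
        rewrite H. symmetry; apply nsum_zero.
      * intros i Hi. destruct (Nat.eqb_spec b i); lia.
    + rewrite nsum_delta; auto.
  - apply in_sub_iter_S in Hw. destruct Hw as (u & Hu & Hw).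
    rewrite (occ_subst_word u w b); auto. 2: apply (sub_iter_on_alphabet m v); auto.
    rewrite (nsum_ext _ _
      (fun c => nsum n (fun d => occ v d * (Mpow m c d * subst_matrix theta b c)))%nat).
    + rewrite nsum_exchange. apply nsum_ext. intros d Hd.
      rewrite nsum_mul_l. f_equal. unfold Mpow. simpl. unfold matmul. apply nsum_ext.
      intros; lia.
    + intros c Hc. rewrite (IHm u c); auto. rewrite Nat.mul_comm, <- nsum_mul_l.
      apply nsum_ext; intros; lia.
Qed.

Lemma occ_sub_iter_letter m a w b : (a < n)%nat -> In w (sub_iter m [a]) -> occ w b = Mpow m b a.
Proof.
  intros Ha Hw. rewrite (occ_sub_iter m [a] w b), nsum_occ_cons, nsum_zero; auto.
  apply on_alphabet_letter; auto.
Qed.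

Lemma length_sub_iter_letter m a w : (a < n)%nat -> In w (sub_iter m [a]) ->
  length w = ell theta m a.
Proof.
  intros Ha Hw. change (length w = length (hd [] (sub_iter m [a]))).
  assert (Hl : on_alphabet [a]) by (apply on_alphabet_letter; auto).
  assert (Hh : In (hd [] (sub_iter m [a])) (sub_iter m [a])).
  { destruct (sub_iter m [a]) as [|h t]; [destruct Hw|]. simpl; auto. }
  rewrite (length_occ_sum w), (length_occ_sum (hd [] (sub_iter m [a]))).
  - apply nsum_ext. intros b _.
    rewrite (occ_sub_iter_letter m a w b), (occ_sub_iter_letter m a _ b); auto.
  - apply (sub_iter_on_alphabet m [a]); auto.
  - apply (sub_iter_on_alphabet m [a]); auto.
Qed.

Lemma length_sub_iter m v w : on_alphabet v -> In w (sub_iter m v) ->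
  length w = nsum n (fun c => occ v c * ell theta m c)%nat.
Proof.
  revert w; induction v as [|x v IH]; intros w Hv Hw.
  - apply in_sub_iter_nil in Hw. subst. symmetry; apply nsum_zero.
  - apply in_sub_iter_cons in Hw. destruct Hw as (w1 & w2 & -> & H1 & H2).
    apply on_alphabet_cons in Hv as [Hx Hv].
    rewrite length_app, (length_sub_iter_letter m x w1), (IH w2), nsum_occ_cons; auto.
Qed.

Lemma card_sub_iter_pos m v : on_alphabet v -> (1 <= card_words (sub_iter m v))%nat.
Proof.
  intros Hv. destruct (sub_iter_inhabited m v Hv) as (w & Hw). eapply card_words_pos; eauto.
Qed.

Lemma card_sub_iter_nil m : card_words (sub_iter m []) = 1%nat.
Proof.
  rewrite (card_words_ext _ [[]]). reflexivity.
  intros w. rewrite in_sub_iter_nil. simpl. split; [intros ->; auto|intros [<-|[]]; auto].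
Qed.

Lemma card_sub_iter_cons m x v : on_alphabet (x :: v) ->
  card_words (sub_iter m (x :: v)) = (card_words (sub_iter m [x]) * card_words (sub_iter m v))%nat.
Proof.
  intros Hv. apply card_words_concat.
  - intros w. apply in_sub_iter_cons.
  - apply on_alphabet_cons in Hv as [Hx _]. intros y z Hy Hz.
    rewrite (length_sub_iter_letter m x y), (length_sub_iter_letter m x z); auto.
Qed.

Lemma ln_card_sub_iter m v : on_alphabet v ->
  ln (INR (card_words (sub_iter m v))) = rsum n (fun c => INR (occ v c) * q theta m c).
Proof.
  induction v as [|x v IH]; intros Hv.
  - rewrite card_sub_iter_nil. simpl. rewrite ln_1. rewrite (rsum_ext _ _ (fun _ => 0)).
    + rewrite rsum_const. ring.
    + intros; unfold occ; simpl; lra.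
  - rewrite card_sub_iter_cons, mult_INR by auto.
    apply on_alphabet_cons in Hv as [Hx Hv].
    pose proof (card_sub_iter_pos m [x] (on_alphabet_letter x Hx)).
    pose proof (card_sub_iter_pos m v Hv).
    rewrite ln_mult, IH, rsum_occ_cons by (auto; apply lt_0_INR; lia). reflexivity.
Qed.

Lemma card_sub_iter_exp m v : on_alphabet v ->
  INR (card_words (sub_iter m v)) = exp (rsum n (fun c => INR (occ v c) * q theta m c)).
Proof.
  intros Hv. rewrite <- ln_card_sub_iter by auto. rewrite exp_ln; auto.
  apply lt_0_INR. pose proof (card_sub_iter_pos m v Hv); lia.
Qed.

Definition MpowR k c a := INR (Mpow k c a).
Definition ellR m a := INR (ell theta m a).

Lemma q_nonneg m a : (a < n)%nat -> 0 <= q theta m a.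
Proof.
  intros Ha. unfold q. apply ln_nonneg. apply (le_INR 1). apply (card_sub_iter_pos m [a]).
  apply on_alphabet_letter; auto.
Qed.

Lemma ell_pos m a : (a < n)%nat -> (1 <= ell theta m a)%nat.
Proof.
  intros Ha. destruct (sub_iter_inhabited m [a] (on_alphabet_letter a Ha)) as (w & Hw).
  rewrite <- (length_sub_iter_letter m a w) by auto.
  assert (w <> [])
    by (apply (sub_iter_nonempty m [a]); auto; [congruence|apply on_alphabet_letter; auto]).
  destruct w; simpl; [congruence|lia].
Qed.

Lemma ellR_ge1 m a : (a < n)%nat -> 1 <= ellR m a.
Proof. intros Ha. unfold ellR. apply (le_INR 1). apply ell_pos; auto. Qed.

Lemma sub_iter_letter_on_alphabet k a v : (a < n)%nat -> In v (sub_iter k [a]) -> on_alphabet v.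
Proof. intros Ha Hv. apply (sub_iter_on_alphabet k [a]); auto using on_alphabet_letter. Qed.

Lemma occ_sub_iter_letterR k a v c : (a < n)%nat -> In v (sub_iter k [a]) ->
  INR (occ v c) = MpowR k c a.
Proof. intros Ha Hv. unfold MpowR. rewrite (occ_sub_iter_letter k a v c); auto. Qed.

(* For any [v] in [theta^k(a)], [theta^m(v)] is contained in [theta^(m+k)(a)]. *)
Lemma q_add_ge m k a : (a < n)%nat ->
  rsum n (fun c => MpowR k c a * q theta m c) <= q theta (m + k) a.
Proof.
  intros Ha. destruct (sub_iter_inhabited k [a] (on_alphabet_letter a Ha)) as (v & Hv).
  assert (Lv : on_alphabet v) by (apply (sub_iter_letter_on_alphabet k a); auto).
  rewrite (rsum_ext _ _ (fun c => INR (occ v c) * q theta m c)).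
  2: intros; rewrite (occ_sub_iter_letterR k a v); auto.
  rewrite <- ln_card_sub_iter by auto. unfold q. apply ln_le.
  - apply lt_0_INR. pose proof (card_sub_iter_pos m v Lv); lia.
  - apply le_INR. apply card_words_incl. intros w Hw. apply in_sub_iter_add. eauto.
Qed.

(* [theta^(m+k)(a)] is the union over [v] in [theta^k(a)] of the sets [theta^m(v)], which
   all have the cardinality of [theta^m(v0)] since their letter counts coincide. *)
Lemma q_add_le m k a : (a < n)%nat ->
  q theta (m + k) a <= q theta k a + rsum n (fun c => MpowR k c a * q theta m c).
Proof.
  intros Ha. destruct (sub_iter_inhabited k [a] (on_alphabet_letter a Ha)) as (v0 & Hv0).
  assert (Lv0 : on_alphabet v0) by (apply (sub_iter_letter_on_alphabet k a); auto).
  assert (Hb : (card_words (sub_iter (m + k) [a]) <=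
               card_words (sub_iter k [a]) * card_words (sub_iter m v0))%nat).
  { apply (card_words_bind_le _ _ (sub_iter m)).
    - intros w. apply in_sub_iter_add.
    - intros v Hv. assert (Lv : on_alphabet v) by (apply (sub_iter_letter_on_alphabet k a); auto).
      apply INR_le. rewrite !card_sub_iter_exp by auto. right. f_equal. apply rsum_ext.
      intros c _. rewrite (occ_sub_iter_letterR k a v c), (occ_sub_iter_letterR k a v0 c); auto. }
  rewrite (rsum_ext _ _ (fun c => INR (occ v0 c) * q theta m c)).
  2: intros; rewrite (occ_sub_iter_letterR k a v0); auto.
  rewrite <- ln_card_sub_iter by auto.
  pose proof (card_sub_iter_pos k [a] (on_alphabet_letter a Ha)).
  pose proof (card_sub_iter_pos m v0 Lv0).
  pose proof (card_sub_iter_pos (m + k) [a] (on_alphabet_letter a Ha)).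
  unfold q. change (subst_pow theta (m + k) a) with (sub_iter (m + k) [a]).
  change (subst_pow theta k a) with (sub_iter k [a]).
  rewrite <- ln_mult by (apply lt_0_INR; lia).
  apply ln_le; [apply lt_0_INR; lia|]. rewrite <- mult_INR. apply le_INR; auto.
Qed.

Lemma ellR_add m k a : (a < n)%nat -> ellR (m + k) a = rsum n (fun c => MpowR k c a * ellR m c).
Proof.
  intros Ha. destruct (sub_iter_inhabited (m + k) [a] (on_alphabet_letter a Ha)) as (w & Hw).
  unfold ellR. rewrite <- (length_sub_iter_letter (m + k) a w) by auto.
  apply in_sub_iter_add in Hw. destruct Hw as (v & Hv & Hw).
  assert (Lv : on_alphabet v) by (apply (sub_iter_letter_on_alphabet k a); auto).
  rewrite (length_sub_iter m v w), INR_nsum by auto. apply rsum_ext. intros c _.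
  rewrite mult_INR, (occ_sub_iter_letterR k a v c); auto.
Qed.

Lemma ellR_0 a : (a < n)%nat -> ellR 0 a = 1.
Proof.
  intros Ha. unfold ellR. rewrite <- (length_sub_iter_letter 0 a [a]); auto.
  apply in_sub_iter_0; auto.
Qed.

Hypothesis Hn : (1 <= n)%nat.

Definition infl_min N := rmin n (fun i => infl_seq theta i N).
Definition infl_max N := rmax n (fun i => infl_seq theta i N).

Lemma q_eq_infl_seq N i : (i < n)%nat -> q theta N i = infl_seq theta i N * ellR N i.
Proof. intros Hi. pose proof (ellR_ge1 N i Hi). unfold infl_seq, ellR in *. field. lra. Qed.

Lemma infl_seq_nonneg N i : (i < n)%nat -> 0 <= infl_seq theta i N.
Proof.
  intros Hi. apply Rdiv_nonneg; [apply q_nonneg; auto|].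
  pose proof (ellR_ge1 N i Hi). unfold ellR in *; lra.
Qed.

Lemma infl_min_le N i : (i < n)%nat -> infl_min N <= infl_seq theta i N.
Proof. apply (rmin_le n (fun i => infl_seq theta i N)). Qed.

Lemma infl_max_ge N i : (i < n)%nat -> infl_seq theta i N <= infl_max N.
Proof. apply (rmax_ge n (fun i => infl_seq theta i N)). Qed.

Lemma infl_min_nonneg N : 0 <= infl_min N.
Proof.
  destruct (rmin_attained n (fun i => infl_seq theta i N) Hn) as (i & Hi & E).
  unfold infl_min. rewrite E. apply infl_seq_nonneg; auto.
Qed.

Lemma infl_min_le_max N : infl_min N <= infl_max N.
Proof. eapply Rle_trans; [apply (infl_min_le N 0)|apply infl_max_ge]; lia. Qed.

Lemma infl_max_nonneg N : 0 <= infl_max N.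
Proof. pose proof (infl_min_nonneg N); pose proof (infl_min_le_max N); lra. Qed.

Lemma q_ge_infl_min N i : (i < n)%nat -> infl_min N * ellR N i <= q theta N i.
Proof.
  intros Hi. rewrite q_eq_infl_seq by auto. apply Rmult_le_compat_r.
  - pose proof (ellR_ge1 N i Hi); lra.
  - apply infl_min_le; auto.
Qed.

Lemma q_le_infl_max N i : (i < n)%nat -> q theta N i <= infl_max N * ellR N i.
Proof.
  intros Hi. rewrite q_eq_infl_seq by auto. apply Rmult_le_compat_r.
  - pose proof (ellR_ge1 N i Hi); lra.
  - apply infl_max_ge; auto.
Qed.
Fixpoint words_of_length (k : nat) : list word :=
  match k with
  | O => [ [] ]
  | S k => flat_map (fun x => map (cons x) (words_of_length k)) (seq 0 n)
  end.

Lemma in_words_of_length k v : In v (words_of_length k) <-> length v = k /\ on_alphabet v.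
Proof.
  revert v; induction k; intros v; simpl.
  - split; [intros [<-|[]]; split; [auto|intros y []]|].
    intros [H _]. destruct v; [auto|simpl in H; lia].
  - rewrite in_flat_map. split.
    + intros (x & Hx & Hv). apply in_map_iff in Hv. destruct Hv as (v' & <- & Hv').
      apply IHk in Hv'. destruct Hv' as [H1 H2]. apply in_seq in Hx. simpl. split; [lia|].
      intros y [<-|Hy]; [lia|auto].
    + intros [H1 H2]. destruct v as [|x v]; [simpl in H1; lia|]. exists x. split.
      * apply in_seq. assert (x < n)%nat by (apply H2; simpl; auto). lia.
      * apply in_map. apply IHk. simpl in H1. split; [lia|]. intros y Hy; apply H2; simpl; auto.
Qed.

Lemma length_words_of_length k : length (words_of_length k) = (n ^ k)%nat.
Proof.
  induction k; simpl; auto.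
  rewrite (flat_map_constant_length (c := (n ^ k)%nat)).
  - rewrite length_seq. auto.
  - intros; rewrite length_map; auto.
Qed.

Definition words_up_to (R : nat) : list word := flat_map words_of_length (seq 0 (S R)).

Lemma in_words_up_to R v : In v (words_up_to R) <-> (length v <= R)%nat /\ on_alphabet v.
Proof.
  unfold words_up_to. rewrite in_flat_map. split.
  - intros (k & Hk & Hv). apply in_seq in Hk. apply in_words_of_length in Hv.
    destruct Hv. split; [lia|auto].
  - intros [H1 H2]. exists (length v). split. apply in_seq; lia. apply in_words_of_length; auto.
Qed.

Lemma length_words_up_to R : (length (words_up_to R) <= S R * n ^ R)%nat.
Proof.
  unfold words_up_to. replace (S R) with (length (seq 0 (S R))) at 2 by apply length_seq.
  apply length_flat_map_le. intros k Hk. apply in_seq in Hk. rewrite length_words_of_length.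
  apply Nat.pow_le_mono_r; lia.
Qed.

Definition ell_sum N := nsum n (fun j => ell theta N j).
Definition ell_sum_below N := nsum N (fun m => nsum n (fun a => ell theta m a)).
Definition inflated_length N v := nsum n (fun c => occ v c * ell theta N c)%nat.

Lemma ell_le_ell_sum N x : (x < n)%nat -> (ell theta N x <= ell_sum N)%nat.
Proof. intros; apply (nsum_term n (fun j => ell theta N j)); auto. Qed.

Lemma drop_first_inflated_letter N x v w pr u sf : (x < n)%nat ->
  In w (sub_iter N (x :: v)) -> w = pr ++ u ++ sf -> (ell_sum N <= length pr)%nat ->
  exists w' pr', In w' (sub_iter N v) /\ w' = pr' ++ u ++ sf.
Proof.
  intros Hx Hw Hwe Hp.
  apply in_sub_iter_cons in Hw. destruct Hw as (w1 & w2 & -> & H1 & H2).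
  pose proof (length_sub_iter_letter N x w1 Hx H1). pose proof (ell_le_ell_sum N x Hx).
  apply app_eq_app in Hwe. destruct Hwe as (l & [[E1 E2]|[E1 E2]]).
  - assert (l = []) by (destruct l; auto; subst; rewrite length_app in *; simpl in *; lia).
    subst l. exists w2, []. auto.
  - exists w2, l. auto.
Qed.

Lemma drop_last_inflated_letter N v y w pr u sf : (y < n)%nat ->
  In w (sub_iter N (v ++ [y])) -> w = pr ++ u ++ sf -> (ell_sum N <= length sf)%nat ->
  exists w' sf', In w' (sub_iter N v) /\ w' = pr ++ u ++ sf'.
Proof.
  intros Hy Hw Hwe Hs.
  apply in_sub_iter_app in Hw. destruct Hw as (w1 & w2 & -> & H1 & H2).
  pose proof (length_sub_iter_letter N y w2 Hy H2). pose proof (ell_le_ell_sum N y Hy).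
  rewrite app_assoc in Hwe. apply app_eq_app in Hwe. destruct Hwe as (l & [[E1 E2]|[E1 E2]]).
  - exists w1, l. split; auto. rewrite E1. symmetry; apply app_assoc.
  - assert (l = []) by (destruct l; auto; subst; rewrite length_app in *; simpl in *; lia).
    subst l. rewrite app_nil_r in E1. exists w1, []. rewrite app_nil_r; auto.
Qed.

(* Peeling inflated letters off both ends while the prefix or suffix is long. *)
Lemma factor_in_short_inflation N v w pr u sf : u <> [] -> on_alphabet v ->
  In w (sub_iter N v) -> w = pr ++ u ++ sf ->
  exists v' w' pr' sf', on_alphabet v' /\ In w' (sub_iter N v') /\ w' = pr' ++ u ++ sf' /\
    (length pr' < ell_sum N)%nat /\ (length sf' < ell_sum N)%nat.
Proof.
  intros Hu. remember (length v) as k eqn:Hk. revert v w pr sf Hk.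
  induction k as [k IH] using lt_wf_ind. intros v w pr sf Hk Hv Hw Hwe.
  destruct v as [|x v0].
  { apply in_sub_iter_nil in Hw. subst. destruct pr, u; simpl in *; congruence. }
  destruct (le_lt_dec (ell_sum N) (length pr)) as [Hp|Hp].
  - destruct (drop_first_inflated_letter N x v0 w pr u sf) as (w' & pr' & Hw' & Ew'); auto.
    { apply Hv; simpl; auto. }
    apply (IH (length v0)) with v0 w' pr' sf; auto.
    + simpl in Hk; lia.
    + intros y Hy; apply Hv; simpl; auto.
  - destruct (le_lt_dec (ell_sum N) (length sf)) as [Hs|Hs]; [|exists (x :: v0), w, pr, sf; auto].
    destruct (exists_last (l := x :: v0)) as (v1 & y & Ev); [congruence|]. rewrite Ev in *.
    destruct (drop_last_inflated_letter N v1 y w pr u sf) as (w' & sf' & Hw' & Ew'); auto.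
    { apply Hv, in_app_iff; simpl; auto. }
    apply (IH (length v1)) with v1 w' pr sf'; auto.
    + rewrite Hk, length_app; simpl; lia.
    + intros z Hz; apply Hv, in_app_iff; auto.
Qed.

Lemma skipn_length_app (pr x : word) : skipn (length pr) (pr ++ x) = x.
Proof. induction pr; simpl; auto. Qed.

Lemma firstn_length_app (u s : word) : firstn (length u) (u ++ s) = u.
Proof. induction u; simpl; auto. f_equal; auto. Qed.

(* A legal word of length [l] (long enough) is a factor, at offset at most [Z], of a word
   of [theta^N(v)] where [v] has inflated length at most [Z = l + 2 * ell_sum N], hence at
   most [Z / Lmin] letters when all level-[N] words have length at least [Lmin]. *)
Definition factor_candidates N l Lmin : list word :=
  let Z := (l + 2 * ell_sum N)%nat in
  flat_map (fun v => flat_map (fun w => map (fun o => firstn l (skipn o w)) (seq 0 (S Z)))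
                               (nodup deq (sub_iter N v)))
           (filter (fun v => Nat.leb (inflated_length N v) Z) (words_up_to (Z / Lmin))).

Lemma ell_le_ell_sum_below N m a : (m < N)%nat -> (a < n)%nat ->
  (ell theta m a <= ell_sum_below N)%nat.
Proof.
  intros Hm Ha. unfold ell_sum_below.
  eapply Nat.le_trans; [|apply (nsum_term N (fun m => nsum n (fun a => ell theta m a)) m); auto].
  apply (nsum_term n (fun a => ell theta m a)); auto.
Qed.

Lemma lang_in_factor_candidates N l Lmin u : (1 <= Lmin)%nat ->
  (forall j, (j < n)%nat -> (Lmin <= ell theta N j)%nat) ->
  (ell_sum_below N < l)%nat -> lang n theta l u -> In u (factor_candidates N l Lmin).
Proof.
  intros HL1 HL Hl (Hlen & m & a & w0 & Ha & Hw0 & pr & sf & Hwe).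
  assert (HmN : (N <= m)%nat).
  { destruct (le_lt_dec N m) as [|Hm]; auto. exfalso.
    pose proof (length_sub_iter_letter m a w0 Ha Hw0).
    pose proof (ell_le_ell_sum_below N m a Hm Ha).
    subst w0. rewrite !length_app in H. lia. }
  replace m with (N + (m - N))%nat in Hw0 by lia.
  apply in_sub_iter_add in Hw0. destruct Hw0 as (v0 & Hv0 & Hw0).
  assert (Lv0 : on_alphabet v0) by (apply (sub_iter_letter_on_alphabet (m - N) a); auto).
  assert (Hu : u <> []) by (intros ->; simpl in Hlen; unfold ell_sum_below in Hl; lia).
  destruct (factor_in_short_inflation N v0 w0 pr u sf Hu Lv0 Hw0 Hwe)
    as (v & w & pr' & sf' & Lv & Hw & -> & Hpr & Hsf).
  assert (Hwl : length (pr' ++ u ++ sf') = inflated_length N v)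
    by (apply (length_sub_iter N v); auto).
  rewrite !length_app in Hwl.
  unfold factor_candidates. apply in_flat_map. exists v. split.
  - apply filter_In. split.
    + apply in_words_up_to. split; auto. apply Nat.div_le_lower_bound; [lia|].
      rewrite (length_occ_sum v Lv). rewrite <- nsum_mul_l. eapply Nat.le_trans.
      * apply (nsum_le n _ (fun c => occ v c * ell theta N c)%nat). intros c Hc.
        specialize (HL c Hc). nia.
      * fold (inflated_length N v). lia.
    + apply Nat.leb_le. lia.
  - apply in_flat_map. exists (pr' ++ u ++ sf'). split. apply nodup_In; auto.
    apply in_map_iff. exists (length pr'). split.
    + rewrite skipn_length_app, <- Hlen. apply firstn_length_app.
    + apply in_seq. lia.
Qed.

Lemma card_lang_le_candidates N l Lmin (c : nat) : (1 <= Lmin)%nat ->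
  (forall j, (j < n)%nat -> (Lmin <= ell theta N j)%nat) ->
  (ell_sum_below N < l)%nat -> has_card (lang n theta l) c ->
  (c <= length (factor_candidates N l Lmin))%nat.
Proof.
  intros H1 H2 H3 (L & HND & HL & Hc). subst c. apply NoDup_incl_length; auto.
  intros u Hu. apply HL in Hu. apply lang_in_factor_candidates; auto.
Qed.

Lemma length_factor_candidates_le N l Lmin :
  INR (length (factor_candidates N l Lmin)) <=
  INR (S ((l + 2 * ell_sum N) / Lmin)) * INR n ^ ((l + 2 * ell_sum N) / Lmin) *
  (exp (infl_max N * INR (l + 2 * ell_sum N)) * INR (S (l + 2 * ell_sum N))).
Proof.
  unfold factor_candidates. set (Z := (l + 2 * ell_sum N)%nat). set (R := (Z / Lmin)%nat).
  eapply Rle_trans; [apply length_flat_map_leR|].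
  - intros v Hv. apply filter_In in Hv. destruct Hv as [Hv Hle]. apply in_words_up_to in Hv.
    destruct Hv as [_ Lv]. apply Nat.leb_le in Hle.
    rewrite (flat_map_constant_length (c := S Z)).
    2: { intros; rewrite length_map, length_seq; auto. }
    rewrite mult_INR. apply Rmult_le_compat_r; [apply pos_INR|].
    change (INR (length (nodup deq (sub_iter N v)))) with (INR (card_words (sub_iter N v))).
    rewrite card_sub_iter_exp by auto. apply exp_le_compat.
    apply Rle_trans with (rsum n (fun c => INR (occ v c) * (infl_max N * ellR N c))).
    + apply rsum_le. intros c Hc. apply Rmult_le_compat_l; [apply pos_INR|].
      apply q_le_infl_max; auto.
    + rewrite (rsum_ext _ _ (fun c => infl_max N * INR (occ v c * ell theta N c)%nat)).
      2: { intros c _. rewrite mult_INR. unfold ellR. ring. }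
      rewrite rsum_scal, <- INR_nsum. apply Rmult_le_compat_l. apply infl_max_nonneg.
      apply le_INR. apply Hle.
  - apply Rmult_le_compat_r.
    + apply Rmult_le_pos. left; apply exp_pos. apply pos_INR.
    + rewrite <- pow_INR, <- mult_INR. apply le_INR.
      eapply Nat.le_trans; [apply filter_length_le|apply length_words_up_to].
Qed.

Lemma card_sub_iter_le_lang N i (c : nat -> nat) : (i < n)%nat ->
  (forall l, has_card (lang n theta l) (c l)) ->
  (card_words (sub_iter N [i]) <= c (ell theta N i))%nat.
Proof.
  intros Hi Hc. destruct (Hc (ell theta N i)) as (L & HND & HL & Hlen). rewrite <- Hlen.
  apply NoDup_incl_length. apply NoDup_nodup. intros w Hw. apply nodup_In in Hw. apply HL.
  split. apply (length_sub_iter_letter N i w); auto.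
  exists N, i, w. split; auto. split; auto. exists [], []. rewrite app_nil_r; auto.
Qed.

Lemma ln_card_lang_le N Lmin l (cl : nat) : (1 <= Lmin)%nat ->
  (forall j, (j < n)%nat -> (Lmin <= ell theta N j)%nat) ->
  (ell_sum_below N < l)%nat -> has_card (lang n theta l) cl ->
  ln (INR cl) <= 2 * ln (INR (S (l + 2 * ell_sum N))) +
                 INR (l + 2 * ell_sum N) * (ln (INR n) / INR Lmin + infl_max N).
Proof.
  intros HL1 HL Hl Hc.
  set (Z := (l + 2 * ell_sum N)%nat).
  set (Q := INR (S (Z / Lmin)) * INR n ^ (Z / Lmin) * (exp (infl_max N * INR Z) * INR (S Z))).
  assert (HcQ : INR cl <= Q).
  { eapply Rle_trans; [apply le_INR, (card_lang_le_candidates N l Lmin cl); auto|].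
    apply length_factor_candidates_le. }
  destruct (ln_count_bound n Z Lmin (infl_max N) Hn HL1 (infl_max_nonneg N)) as [HQ1 HlnQ].
  fold Q in HQ1, HlnQ. eapply Rle_trans; [|exact HlnQ].
  destruct (Nat.eq_dec cl 0) as [E|E].
  - rewrite E. simpl. rewrite ln_0. apply ln_nonneg; auto.
  - apply ln_le; auto. apply lt_0_INR. lia.
Qed.

(* Letting [l -> oo] in [ln_card_lang_le]: the logarithmic terms and the boundary
   contribution [2 * ell_sum N] are negligible against [l]. *)
Lemma entropy_le_infl_max N Lmin (c : nat -> nat) s : (1 <= Lmin)%nat ->
  (forall j, (j < n)%nat -> (Lmin <= ell theta N j)%nat) ->
  (forall l, has_card (lang n theta l) (c l)) ->
  Un_cv (fun l => ln (INR (c l)) / INR l) s ->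
  s <= ln (INR n) / INR Lmin + infl_max N.
Proof.
  intros HL1 HL Hc Hs.
  set (B := ln (INR n) / INR Lmin + infl_max N).
  assert (HB : 0 <= B).
  { assert (0 <= ln (INR n)) by (apply ln_nonneg, (le_INR 1); auto).
    assert (0 <= ln (INR n) / INR Lmin) by (apply Rdiv_nonneg; [|apply lt_0_INR; lia]; auto).
    pose proof (infl_max_nonneg N). unfold B; lra. }
  apply le_epsilon_le. intros eta He.
  destruct (ln_le_eps_mul_eventually (eta / 8)) as (X & HX & HXs); [lra|].
  set (LsR := INR (ell_sum N)).
  assert (HLs : 0 <= LsR) by apply pos_INR.
  destruct (INR_unbounded (X + 4 * LsR * B / eta)) as (k & Hk).
  apply (Un_cv_le_eventually _ s (B + eta) (k + ell_sum_below N + 2 * ell_sum N + 1) Hs).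
  intros l Hl.
  assert (HlR : INR k + 2 * LsR + 1 <= INR l).
  { assert (INR (k + 2 * ell_sum N + 1) <= INR l) by (apply le_INR; lia).
    rewrite !plus_INR, mult_INR in H. unfold LsR. simpl in H. lra. }
  assert (H4 : 0 <= 4 * LsR * B / eta) by (apply Rdiv_nonneg; [nra|lra]).
  assert (Hl0 : 0 < INR l) by lra.
  assert (HZ : INR (l + 2 * ell_sum N) = INR l + 2 * LsR).
  { unfold LsR. rewrite plus_INR, mult_INR. simpl. lra. }
  pose proof (ln_card_lang_le N Lmin l (c l) HL1 HL ltac:(lia) (Hc l)) as Hmain.
  fold B in Hmain. rewrite HZ in Hmain.
  assert (Hln2 : ln (INR (S (l + 2 * ell_sum N))) <= eta / 8 * (2 * INR l)).
  { rewrite S_INR, HZ. eapply Rle_trans; [apply ln_le; [lra|]|apply HXs]; lra. }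
  assert (HLB : 2 * LsR * B <= eta / 2 * INR l).
  { assert (4 * LsR * B / eta <= INR l) by lra.
    apply Rmult_le_compat_l with (r := eta / 2) in H; [|lra].
    replace (eta / 2 * (4 * LsR * B / eta)) with (2 * LsR * B) in H by (field; lra). lra. }
  apply Rmult_le_reg_r with (INR l); auto.
  replace (ln (INR (c l)) / INR l * INR l) with (ln (INR (c l))) by (field; lra).
  nra.
Qed.

Section PerronFrobenius.
Variable lam : R.
Variable Rv : nat -> R.
Hypothesis HPF : PF_pair n (subst_matrix theta) lam Rv.

Lemma Rv_pos i : (i < n)%nat -> 0 < Rv i.
Proof. destruct HPF as [H _]. auto. Qed.

Lemma Rv_sum : rsum n Rv = 1.
Proof. destruct HPF as [_ [H _]]. auto. Qed.

Lemma Rv_le1 i : (i < n)%nat -> Rv i <= 1.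
Proof. intros Hi. rewrite <- Rv_sum. apply rsum_term; auto. intros; left; apply Rv_pos; auto. Qed.

Lemma Mpow_eigen k b : (b < n)%nat -> rsum n (fun a => MpowR k b a * Rv a) = lam ^ k * Rv b.
Proof.
  revert b; induction k; intros b Hb.
  - unfold MpowR, Mpow. cbn [matpow]. rewrite rsum_delta by auto. simpl; lra.
  - unfold MpowR, Mpow. cbn [matpow]. unfold matmul.
    rewrite (rsum_ext _ _
      (fun a => rsum n (fun c => INR (subst_matrix theta b c) * (MpowR k c a * Rv a)))).
    + rewrite rsum_exchange.
      rewrite (rsum_ext _ _ (fun c => INR (subst_matrix theta b c) * (lam ^ k * Rv c))).
      * rewrite (rsum_ext _ _ (fun c => lam ^ k * (INR (subst_matrix theta b c) * Rv c)))
          by (intros; lra).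
        rewrite rsum_scal. destruct HPF as [_ [_ H3]]. rewrite H3 by auto. simpl; lra.
      * intros c Hc. rewrite rsum_scal, IHk; auto.
    + intros a _. rewrite INR_nsum. rewrite Rmult_comm, <- rsum_scal. apply rsum_ext.
      intros c _. rewrite mult_INR. unfold MpowR, Mpow. lra.
Qed.

Lemma ellR_eigen k : rsum n (fun a => ellR k a * Rv a) = lam ^ k.
Proof.
  rewrite (rsum_ext _ _ (fun a => rsum n (fun c => MpowR k c a * Rv a))).
  - rewrite rsum_exchange. rewrite (rsum_ext _ _ (fun c => lam ^ k * Rv c)).
    + rewrite rsum_scal, Rv_sum. lra.
    + intros; apply Mpow_eigen; auto.
  - intros a Ha. replace k with (0 + k)%nat at 1 by lia. rewrite ellR_add by auto.
    rewrite Rmult_comm, <- rsum_scal. apply rsum_ext. intros c Hc. rewrite ellR_0 by auto. lra.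
Qed.

Lemma qR_nonneg m : 0 <= qR n theta Rv m.
Proof.
  unfold qR. apply rsum_nonneg. intros i Hi.
  apply Rmult_le_pos; [apply q_nonneg; auto|left; apply Rv_pos; auto].
Qed.

Lemma qR_add_ge m k : lam ^ k * qR n theta Rv m <= qR n theta Rv (m + k).
Proof.
  unfold qR.
  apply Rle_trans with (rsum n (fun a => rsum n (fun c => MpowR k c a * q theta m c) * Rv a)).
  - rewrite (rsum_ext _ (fun a => rsum n (fun c => MpowR k c a * q theta m c) * Rv a)
       (fun a => rsum n (fun c => q theta m c * (MpowR k c a * Rv a)))).
    + rewrite rsum_exchange. rewrite <- rsum_scal. right. apply rsum_ext. intros c Hc.
      rewrite rsum_scal, Mpow_eigen by auto. lra.
    + intros a _. rewrite Rmult_comm, <- rsum_scal. apply rsum_ext; intros; lra.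
  - apply rsum_le. intros a Ha. apply Rmult_le_compat_r; [left; apply Rv_pos; auto|].
    apply q_add_ge; auto.
Qed.

Lemma qR_add_le m k : qR n theta Rv (m + k) <= qR n theta Rv k + lam ^ k * qR n theta Rv m.
Proof.
  unfold qR. apply Rle_trans with
    (rsum n (fun a => (q theta k a + rsum n (fun c => MpowR k c a * q theta m c)) * Rv a)).
  - apply rsum_le. intros a Ha. apply Rmult_le_compat_r; [left; apply Rv_pos; auto|].
    apply q_add_le; auto.
  - right. rewrite (rsum_ext _ _
      (fun a => q theta k a * Rv a + rsum n (fun c => q theta m c * (MpowR k c a * Rv a)))).
    + rewrite rsum_plus. f_equal. rewrite rsum_exchange, <- rsum_scal. apply rsum_ext. intros c Hc.
      rewrite rsum_scal, Mpow_eigen by auto. lra.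
    + intros a _. rewrite Rmult_plus_distr_r. f_equal. rewrite Rmult_comm, <- rsum_scal.
      apply rsum_ext; intros; lra.
Qed.

Lemma lam_ge1 : 1 <= lam.
Proof.
  pose proof (ellR_eigen 1). simpl in H. rewrite Rmult_1_r in H. rewrite <- H, <- Rv_sum.
  apply rsum_le. intros i Hi. pose proof (ellR_ge1 1 i Hi). pose proof (Rv_pos i Hi). nra.
Qed.

Lemma infl_min_S N : infl_min N <= infl_min (S N).
Proof.
  destruct (rmin_attained n (fun i => infl_seq theta i (S N)) Hn) as (i & Hi & E).
  unfold infl_min at 2. rewrite E. unfold infl_seq. fold (ellR (S N) i).
  apply Rmult_le_reg_r with (ellR (S N) i); [pose proof (ellR_ge1 (S N) i Hi); lra|].
  unfold Rdiv. rewrite Rmult_assoc, Rinv_l, Rmult_1_r by (pose proof (ellR_ge1 (S N) i Hi); lra).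
  replace (S N) with (N + 1)%nat by lia. rewrite ellR_add by auto.
  eapply Rle_trans; [|apply q_add_ge; auto]. rewrite <- rsum_scal. apply rsum_le. intros c Hc.
  pose proof (q_ge_infl_min N c Hc). assert (0 <= MpowR 1 c i) by (apply pos_INR). nra.
Qed.

Lemma infl_min_qR N : infl_min N * lam ^ N <= qR n theta Rv N.
Proof.
  rewrite <- ellR_eigen, <- rsum_scal. unfold qR. apply rsum_le. intros i Hi.
  pose proof (q_ge_infl_min N i Hi). pose proof (Rv_pos i Hi). nra.
Qed.

Lemma qR_infl_max N : qR n theta Rv N <= infl_max N * lam ^ N.
Proof.
  rewrite <- ellR_eigen, <- rsum_scal. unfold qR. apply rsum_le. intros i Hi.
  pose proof (q_le_infl_max N i Hi). pose proof (Rv_pos i Hi). nra.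
Qed.

Definition qR_scaled m := qR n theta Rv m / lam ^ m.

Lemma lam_pow_pos k : 0 < lam ^ k.
Proof. apply pow_lt. pose proof lam_ge1; lra. Qed.

Lemma qR_scaled_add m k : qR_scaled m <= qR_scaled (m + k).
Proof.
  unfold qR_scaled. rewrite pow_add. pose proof (lam_pow_pos m). pose proof (lam_pow_pos k).
  pose proof (qR_add_ge m k). apply Rmult_le_reg_r with (lam ^ m * lam ^ k). nra.
  unfold Rdiv. rewrite !Rmult_assoc.
  rewrite Rinv_l by nra. rewrite Rmult_1_r.
  replace (/ lam ^ m * (lam ^ m * lam ^ k)) with (lam ^ k) by (field; lra). nra.
Qed.

Lemma infl_min_qR_scaled N : infl_min N <= qR_scaled N.
Proof.
  unfold qR_scaled. pose proof (lam_pow_pos N). apply Rmult_le_reg_r with (lam ^ N); auto.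
  unfold Rdiv. rewrite Rmult_assoc, Rinv_l, Rmult_1_r by lra. apply infl_min_qR.
Qed.

Lemma qR_scaled_infl_max N : qR_scaled N <= infl_max N.
Proof.
  unfold qR_scaled. pose proof (lam_pow_pos N). apply Rmult_le_reg_r with (lam ^ N); auto.
  unfold Rdiv. rewrite Rmult_assoc, Rinv_l, Rmult_1_r by lra. apply qR_infl_max.
Qed.

(* Induction on [j] via [qR_add_le]: [U := qR m / (lam^m - 1)] satisfies [qR m + U = U lam^m]. *)
Lemma qR_mul_le_geom m j : (1 <= m)%nat -> 1 < lam ->
  qR n theta Rv (j * m) <= qR n theta Rv m / (lam ^ m - 1) * lam ^ (j * m).
Proof.
  intros Hm Hl. assert (HX : 1 < lam ^ m).
  { destruct m; [lia|]. simpl.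
    pose proof (Rle_pow lam 0 m ltac:(lra) ltac:(lia)). simpl in H. nra. }
  set (U := qR n theta Rv m / (lam ^ m - 1)).
  assert (HU : U * (lam ^ m - 1) = qR n theta Rv m) by (unfold U; field; lra).
  assert (HU0 : 0 <= U) by (unfold U; apply Rdiv_nonneg; [apply qR_nonneg|lra]).
  induction j.
  - simpl. pose proof (qR_add_ge 0 m). simpl in H. rewrite Rmult_1_r.
    pose proof (qR_nonneg 0). pose proof (qR_nonneg m). nra.
  - replace (S j * m)%nat with (m + j * m)%nat by lia.
    rewrite pow_add. pose proof (qR_add_le m (j * m)). pose proof (lam_pow_pos (j * m)).
    pose proof (qR_nonneg m). nra.
Qed.

Lemma qR_scaled_le_geom m k : (1 <= m)%nat -> 1 < lam ->
  qR_scaled k <= qR n theta Rv m / (lam ^ m - 1).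
Proof.
  intros Hm Hl. apply Rle_trans with (qR_scaled (k * m)).
  - replace (k * m)%nat with (k + (k * m - k))%nat by nia. apply qR_scaled_add.
  - unfold qR_scaled. pose proof (lam_pow_pos (k * m)). pose proof (qR_mul_le_geom m k Hm Hl).
    apply Rmult_le_reg_r with (lam ^ (k * m)); auto. unfold Rdiv at 1.
    rewrite Rmult_assoc, Rinv_l, Rmult_1_r by lra. auto.
Qed.

Lemma infl_min_cv : 1 < lam -> { g | Un_cv infl_min g }.
Proof.
  intros Hl. apply growing_cv.
  - intros N. apply infl_min_S.
  - exists (qR n theta Rv 1 / (lam ^ 1 - 1)). intros x (N & ->).
    eapply Rle_trans; [apply infl_min_qR_scaled|]. apply qR_scaled_le_geom; auto.
Qed.

Lemma MpowR_nonneg k j a : 0 <= MpowR k j a.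
Proof. apply pos_INR. Qed.

Definition ellR_sum N := rsum n (fun c => ellR N c).

Lemma ellR_sum_ge_pow M : lam ^ M <= ellR_sum M.
Proof.
  rewrite <- ellR_eigen. apply rsum_le. intros c Hc. pose proof (Rv_le1 c Hc).
  pose proof (Rv_pos c Hc). pose proof (ellR_ge1 M c Hc). nra.
Qed.

Section Primitive.
Variable p : nat.
Hypothesis Hpos : forall i j, (i < n)%nat -> (j < n)%nat -> (0 < Mpow p i j)%nat.

Definition MpowR_sum := rsum n (fun j => rsum n (fun a => MpowR p j a)).

Lemma MpowR_ge1 j a : (j < n)%nat -> (a < n)%nat -> 1 <= MpowR p j a.
Proof. intros. unfold MpowR. apply (le_INR 1). apply Hpos; auto. Qed.

Lemma MpowR_le_sum j a : (j < n)%nat -> (a < n)%nat -> MpowR p j a <= MpowR_sum.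
Proof.
  intros. unfold MpowR_sum. eapply Rle_trans; [|apply (rsum_term _ _ j)]; auto.
  - apply (rsum_term n (fun a => MpowR p j a)); auto. intros; apply MpowR_nonneg.
  - intros; apply rsum_nonneg; intros; apply MpowR_nonneg.
Qed.

Lemma MpowR_sum_ge1 : 1 <= MpowR_sum.
Proof. eapply Rle_trans; [apply (MpowR_ge1 0 0)|apply MpowR_le_sum]; lia. Qed.

Lemma ellR_sum_ge1 N : 1 <= ellR_sum N.
Proof.
  unfold ellR_sum. eapply Rle_trans; [apply (ellR_ge1 N 0); lia|].
  apply (rsum_term n (fun c => ellR N c)); [|lia].
  intros j Hj; pose proof (ellR_ge1 N j Hj); lra.
Qed.

Lemma ellR_ge_sum N j : (j < n)%nat -> ellR_sum N <= ellR (N + p) j.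
Proof.
  intros Hj. rewrite ellR_add by auto. unfold ellR_sum. apply rsum_le. intros c Hc.
  pose proof (MpowR_ge1 c j Hc Hj). pose proof (ellR_ge1 N c Hc). nra.
Qed.

Lemma ellR_le_sum N j : (j < n)%nat -> ellR (N + p) j <= MpowR_sum * ellR_sum N.
Proof.
  intros Hj. rewrite ellR_add by auto. unfold ellR_sum. rewrite <- rsum_scal.
  apply rsum_le. intros c Hc.
  pose proof (MpowR_le_sum c j Hc Hj). pose proof (ellR_ge1 N c Hc). nra.
Qed.

(* Every letter [j] occurs in each word of [theta^p(a_i)], so its excess over the
   minimal ratio is inherited by [q_{N+p,i}]. *)
Lemma q_ge_infl_min_excess N i j : (i < n)%nat -> (j < n)%nat ->
  infl_min N * ellR (N + p) i + ellR N j * (infl_seq theta j N - infl_min N)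
  <= q theta (N + p) i.
Proof.
  intros Hi Hj. eapply Rle_trans; [|apply q_add_ge; auto].
  rewrite ellR_add, <- rsum_scal by auto.
  rewrite (rsum_ext _ (fun c => MpowR p c i * q theta N c)
     (fun c => infl_min N * (MpowR p c i * ellR N c)
               + MpowR p c i * ellR N c * (infl_seq theta c N - infl_min N))).
  2: { intros c Hc. rewrite q_eq_infl_seq by auto. ring. }
  rewrite rsum_plus. apply Rplus_le_compat_l.
  eapply Rle_trans; [|apply (rsum_term _ _ j)]; auto.
  - pose proof (MpowR_ge1 j i Hj Hi). pose proof (ellR_ge1 N j Hj).
    pose proof (infl_min_le N j Hj).
    assert (0 <= ellR N j * (infl_seq theta j N - infl_min N)) by (apply Rmult_le_pos; lra).
    nra.
  - intros c Hc. pose proof (infl_min_le N c Hc). pose proof (MpowR_nonneg p c i).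
    pose proof (ellR_ge1 N c Hc). apply Rmult_le_pos; [|lra]. nra.
Qed.

(* Applied at level [N = M + p], both [ell_{N,j}] and [ell_{N+p,i}] are comparable to
   [ellR_sum M], which turns the excess of [q_ge_infl_min_excess] into a fixed
   fraction of the spread [infl_max N - infl_min N]. *)
Lemma infl_min_contraction M :
  infl_min (M + p) + (infl_max (M + p) - infl_min (M + p)) / (INR n * MpowR_sum * MpowR_sum)
  <= infl_min (M + p + p).
Proof.
  set (N := (M + p)%nat). set (C := INR n * MpowR_sum * MpowR_sum).
  pose proof MpowR_sum_ge1. pose proof (ellR_sum_ge1 M) as HM.
  assert (Hn' : 1 <= INR n) by (apply (le_INR 1); auto).
  assert (HC : 0 < C) by (unfold C; nra).
  destruct (rmin_attained n (fun i => infl_seq theta i (N + p)) Hn) as (i & Hi & Ei).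
  destruct (rmax_attained n (fun i => infl_seq theta i N) Hn) as (j & Hj & Ej).
  assert (Hmax : infl_seq theta j N = infl_max N) by (symmetry; exact Ej).
  unfold infl_min at 3. rewrite Ei. unfold infl_seq. fold (ellR (N + p) i).
  assert (HLi : 1 <= ellR (N + p) i) by (apply ellR_ge1; auto).
  assert (HLup : ellR (N + p) i <= C * ellR_sum M).
  { assert (ellR_sum N <= INR n * (MpowR_sum * ellR_sum M)).
    { rewrite <- rsum_const. apply rsum_le. intros c Hc. apply ellR_le_sum; auto. }
    eapply Rle_trans; [apply ellR_le_sum; auto|]. unfold C. nra. }
  assert (HLj : ellR_sum M <= ellR N j) by (apply ellR_ge_sum; auto).
  assert (HG : 0 <= infl_max N - infl_min N) by (pose proof (infl_min_le_max N); lra).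
  pose proof (q_ge_infl_min_excess N i j Hi Hj) as Hq. rewrite Hmax in Hq.
  assert (Hfrac : (infl_max N - infl_min N) / C * ellR (N + p) i
                  <= (infl_max N - infl_min N) * ellR_sum M).
  { apply Rmult_le_reg_l with C; auto.
    replace (C * ((infl_max N - infl_min N) / C * ellR (N + p) i))
      with ((infl_max N - infl_min N) * ellR (N + p) i) by (field; lra). nra. }
  apply Rmult_le_reg_r with (ellR (N + p) i); [lra|].
  replace (q theta (N + p) i / ellR (N + p) i * ellR (N + p) i) with (q theta (N + p) i)
    by (field; lra).
  nra.
Qed.

Lemma ellR_growth M j : (j < n)%nat -> 1 + INR M * (lam - 1) <= ellR (M + p) j.
Proof.
  intros Hj. eapply Rle_trans; [apply pow_bernoulli, lam_ge1|].
  eapply Rle_trans; [apply ellR_sum_ge_pow|apply ellR_ge_sum; auto].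
Qed.

Lemma ell_unbounded : 1 < lam -> forall L0, exists N0, forall N j, (N0 <= N)%nat ->
  (j < n)%nat -> (L0 <= ell theta N j)%nat.
Proof.
  intros Hl L0. destruct (INR_unbounded (INR L0 / (lam - 1))) as (M0 & HM0).
  exists (M0 + p)%nat. intros N j HN Hj.
  pose proof (ellR_growth (N - p) j Hj). replace (N - p + p)%nat with N in H by lia.
  assert (INR M0 <= INR (N - p)) by (apply le_INR; lia).
  assert (INR L0 < INR M0 * (lam - 1)).
  { apply Rmult_lt_compat_r with (r := lam - 1) in HM0; [|lra].
    replace (INR L0 / (lam - 1) * (lam - 1)) with (INR L0) in HM0 by (field; lra). lra. }
  assert (INR L0 < INR (ell theta N j)) by (unfold ellR in H; nra).
  apply INR_lt in H2. lia.
Qed.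

Section Limit.
Variable gam : R.
Hypothesis Hgam : Un_cv infl_min gam.

Lemma infl_min_le_lim N : infl_min N <= gam.
Proof. exact (growing_ineq infl_min gam infl_min_S Hgam N). Qed.

Lemma infl_max_cv : Un_cv infl_max gam.
Proof.
  pose proof MpowR_sum_ge1. assert (Hn' : 1 <= INR n) by (apply (le_INR 1); auto).
  set (C := INR n * MpowR_sum * MpowR_sum). assert (HC : 1 <= C) by (unfold C; nra).
  apply Un_cv_intro. intros eps He.
  destruct (Un_cv_elim infl_min gam Hgam (eps / C)) as (N0 & HN0).
  { apply Rdiv_lt_0_compat; lra. }
  exists (N0 + p)%nat. intros k Hk.
  pose proof (HN0 k ltac:(lia)). pose proof (infl_min_le_max k).
  pose proof (infl_min_le_lim k). pose proof (infl_min_le_lim (k + p)).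
  pose proof (infl_min_contraction (k - p)) as Hc. replace (k - p + p)%nat with k in Hc by lia.
  fold C in Hc.
  assert (Hspread : infl_max k - infl_min k <= C * (gam - infl_min k)).
  { apply Rmult_le_reg_r with (/ C); [apply Rinv_0_lt_compat; lra|].
    replace (C * (gam - infl_min k) * / C) with (gam - infl_min k) by (field; lra).
    unfold Rdiv in Hc. lra. }
  assert (Hlt : C * (gam - infl_min k) < eps).
  { replace eps with (C * (eps / C)) by (field; lra). apply Rmult_lt_compat_l; lra. }
  assert (eps / C <= eps).
  { apply Rmult_le_reg_r with C; [lra|]. replace (eps / C * C) with eps by (field; lra). nra. }
  lra.
Qed.

Lemma infl_seq_cv i : (i < n)%nat -> Un_cv (infl_seq theta i) gam.
Proof.
  intros Hi. apply (Un_cv_squeeze infl_min _ infl_max); auto using infl_max_cv.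
  intros k; split; [apply infl_min_le|apply infl_max_ge]; auto.
Qed.

Lemma qR_scaled_cv : Un_cv qR_scaled gam.
Proof.
  apply (Un_cv_squeeze infl_min _ infl_max); auto using infl_max_cv.
  intros k; split; [apply infl_min_qR_scaled|apply qR_scaled_infl_max].
Qed.

Lemma qR_scaled_le_lim m : qR_scaled m <= gam.
Proof.
  apply (growing_ineq qR_scaled); [|exact qR_scaled_cv].
  intros k. rewrite <- Nat.add_1_r. apply qR_scaled_add.
Qed.

Lemma lim_le_qR_geom m : (1 <= m)%nat -> 1 < lam ->
  gam <= qR n theta Rv m / (lam ^ m - 1).
Proof.
  intros Hm Hl. apply (Un_cv_le_eventually qR_scaled gam _ 0 qR_scaled_cv).
  intros k _. apply qR_scaled_le_geom; auto.
Qed.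

(* Level-[N] inflation words of the unboundedly long letters cover every long legal
   word, so [entropy_le_infl_max] applies with [Lmin] as large as we like. *)
Lemma entropy_le_lim (c : nat -> nat) s : 1 < lam ->
  (forall l, has_card (lang n theta l) (c l)) ->
  Un_cv (fun l => ln (INR (c l)) / INR l) s -> s <= gam.
Proof.
  intros Hl Hc Hs. apply le_epsilon_le. intros eps He.
  assert (HnR : 1 <= INR n) by (apply (le_INR 1); auto).
  assert (Hln : 0 <= ln (INR n)) by (apply ln_nonneg; auto).
  destruct (INR_unbounded (2 * ln (INR n) / eps)) as (L1 & HL1).
  destruct (ell_unbounded Hl (S L1)) as (N0 & HN0).
  destruct (Un_cv_elim infl_max gam infl_max_cv (eps / 2) ltac:(lra)) as (N1 & HN1).
  pose proof (entropy_le_infl_max (N0 + N1) (S L1) c s ltac:(lia)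
     (fun j Hj => HN0 (N0 + N1)%nat j ltac:(lia) Hj) Hc Hs).
  specialize (HN1 (N0 + N1)%nat ltac:(lia)).
  assert (ln (INR n) / INR (S L1) <= eps / 2).
  { rewrite S_INR. pose proof (pos_INR L1).
    apply Rmult_le_reg_r with (INR L1 + 1); [lra|].
    replace (ln (INR n) / (INR L1 + 1) * (INR L1 + 1)) with (ln (INR n)) by (field; lra).
    apply Rmult_lt_compat_r with (r := eps / 2) in HL1; [|lra].
    replace (2 * ln (INR n) / eps * (eps / 2)) with (ln (INR n)) in HL1 by (field; lra).
    nra. }
  lra.
Qed.

(* [theta^N(a_0)] consists of legal words of length [ell_{N,0}], which tends to infinity. *)
Lemma lim_le_entropy (c : nat -> nat) s : 1 < lam ->
  (forall l, has_card (lang n theta l) (c l)) ->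
  Un_cv (fun l => ln (INR (c l)) / INR l) s -> gam <= s.
Proof.
  intros Hl Hc Hs.
  set (h := fun l => ln (INR (c l)) / INR l).
  assert (Hcomp : Un_cv (fun N => h (ell theta N 0)) s).
  { apply Un_cv_intro. intros eps He. destruct (Un_cv_elim h s Hs eps He) as (L0 & HL0).
    destruct (ell_unbounded Hl L0) as (N0 & HN0). exists N0. intros k Hk.
    apply HL0. apply HN0; auto; lia. }
  apply (Rle_cv_lim (Un := infl_seq theta 0) (Vn := fun N => h (ell theta N 0)));
    [|apply infl_seq_cv; lia|exact Hcomp].
  intros N. unfold h, infl_seq. fold (ellR N 0).
  assert (H1 : 1 <= ellR N 0) by (apply ellR_ge1; lia).
  apply Rmult_le_compat_r; [left; apply Rinv_0_lt_compat; lra|].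
  unfold q. apply ln_le.
  - apply lt_0_INR. change (subst_pow theta N 0) with (sub_iter N [0%nat]).
    pose proof (card_sub_iter_pos N [0%nat] (on_alphabet_letter 0 ltac:(lia))). lia.
  - apply le_INR. apply (card_sub_iter_le_lang N 0 c); auto; lia.
Qed.

End Limit.

End Primitive.

Section NoInflation.
Hypothesis Hlam1 : lam = 1.

(* With [lam = 1] the identity [sum_a ell_{k,a} R_a = lam^k] and [ell_{k,a} >= 1] force
   every letter to be substituted by a single letter. *)
Lemma ellR_lam1 k a : (a < n)%nat -> ellR k a = 1.
Proof.
  intros Ha. pose proof (ellR_eigen k) as H. rewrite Hlam1, pow1 in H.
  assert (Hz : rsum n (fun a => (ellR k a - 1) * Rv a) = 0).
  { rewrite (rsum_ext _ _ (fun a => ellR k a * Rv a - Rv a)) by (intros; ring).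
    rewrite rsum_minus, H, Rv_sum. ring. }
  assert ((ellR k a - 1) * Rv a <= 0).
  { rewrite <- Hz. apply (rsum_term n (fun a => (ellR k a - 1) * Rv a)); auto.
    intros j Hj. pose proof (ellR_ge1 k j Hj). pose proof (Rv_pos j Hj). nra. }
  pose proof (ellR_ge1 k a Ha). pose proof (Rv_pos a Ha). nra.
Qed.

Lemma ell_lam1 k a : (a < n)%nat -> ell theta k a = 1%nat.
Proof. intros Ha. pose proof (ellR_lam1 k a Ha). unfold ellR in H. apply INR_eq. auto. Qed.

(* A one-letter word [x0] of [theta^m(a)] is determined by [|x0|_{x0} = M^m_{x0,a}]. *)
Lemma q_lam1 m a : (a < n)%nat -> q theta m a = 0.
Proof.
  intros Ha. unfold q.
  assert (card_words (sub_iter m [a]) = 1%nat).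
  { apply Nat.le_antisymm.
    - apply card_words_le1. intros x y Hx Hy.
      pose proof (length_sub_iter_letter m a x Ha Hx).
      pose proof (length_sub_iter_letter m a y Ha Hy).
      rewrite ell_lam1 in H, H0 by auto.
      destruct x as [|x0 [|]]; simpl in H; try lia. destruct y as [|y0 [|]]; simpl in H0; try lia.
      pose proof (occ_sub_iter_letter m a [x0] x0 Ha Hx).
      pose proof (occ_sub_iter_letter m a [y0] x0 Ha Hy).
      rewrite <- H2 in H1. unfold occ in H1. simpl in H1.
      destruct (Nat.eq_dec x0 x0); [|congruence].
      destruct (Nat.eq_dec y0 x0); [subst; auto|discriminate].
    - apply card_sub_iter_pos. apply on_alphabet_letter; auto. }
  change (subst_pow theta m a) with (sub_iter m [a]). rewrite H. simpl. apply ln_1.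
Qed.

Lemma qR_lam1 m : qR n theta Rv m = 0.
Proof.
  unfold qR. rewrite (rsum_ext _ _ (fun _ => 0)); [rewrite rsum_const; ring|].
  intros i Hi. rewrite q_lam1 by auto. ring.
Qed.

Lemma card_lang_lam1 (c : nat -> nat) l : (2 <= l)%nat ->
  has_card (lang n theta l) (c l) -> c l = 0%nat.
Proof.
  intros Hl (L & _ & HL & Hlen). destruct L as [|u L]; [simpl in Hlen; auto|].
  exfalso. assert (lang n theta l u) by (apply HL; simpl; auto).
  destruct H as (Hu & m & a & w & Ha & Hw & pr & sf & ->).
  pose proof (length_sub_iter_letter m a _ Ha Hw). rewrite ell_lam1 in H by auto.
  rewrite !length_app in H. lia.
Qed.

Lemma entropy_lam1 (c : nat -> nat) s : (forall l, has_card (lang n theta l) (c l)) ->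
  Un_cv (fun l => ln (INR (c l)) / INR l) s -> s = 0.
Proof.
  intros Hc Hs.
  assert (Hz : forall l, (2 <= l)%nat -> ln (INR (c l)) / INR l = 0).
  { intros l Hl. rewrite (card_lang_lam1 c l Hl (Hc l)). simpl. rewrite ln_0. unfold Rdiv. ring. }
  apply Rle_antisym.
  - apply (Un_cv_le_eventually _ s 0 2 Hs). intros; rewrite Hz; auto; lra.
  - apply (Un_cv_ge_eventually _ s 0 2 Hs). intros; rewrite Hz; auto; lra.
Qed.

End NoInflation.

(* The upper bound is read with Rocq's [x / 0 = 0] when [lam = 1]; then everything is [0]. *)
Lemma entropy_eq_inflation_limits s :
  primitive_mat n (subst_matrix theta) -> top_entropy n theta s ->
  (forall i, (i < n)%nat -> Un_cv (infl_seq theta i) s) /\ Un_cv qR_scaled s /\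
  (forall m, qR_scaled m <= s) /\
  (forall m, (1 <= m)%nat -> s <= qR n theta Rv m / (lam ^ m - 1)).
Proof.
  intros Hprim (c & Hc & Hcv).
  destruct (Rle_lt_or_eq_dec 1 lam lam_ge1) as [Hl|Hl].
  - destruct Hprim as (p & _ & Hpos). destruct (infl_min_cv Hl) as (gam & Hgam).
    assert (Hs : s = gam).
    { apply Rle_antisym;
        [apply (entropy_le_lim p Hpos gam Hgam c)|apply (lim_le_entropy p Hpos gam Hgam c)]; auto. }
    subst s. split; [|split; [|split]].
    + intros i Hi. apply (infl_seq_cv p Hpos gam Hgam i Hi).
    + apply (qR_scaled_cv p Hpos gam Hgam).
    + apply (qR_scaled_le_lim p Hpos gam Hgam).
    + intros m Hm. apply (lim_le_qR_geom p Hpos gam Hgam m Hm Hl).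
  - symmetry in Hl. rewrite (entropy_lam1 Hl c s Hc Hcv).
    assert (Hz : forall m, qR_scaled m = 0).
    { intros m. unfold qR_scaled. rewrite (qR_lam1 Hl). unfold Rdiv; ring. }
    split; [|split; [|split]].
    + intros i Hi. apply (Un_cv_ext (fun _ => 0)); [|apply Un_cv_const].
      intros m. unfold infl_seq. rewrite (q_lam1 Hl m i Hi). unfold Rdiv; ring.
    + apply (Un_cv_ext (fun _ => 0)); [intros; rewrite Hz; auto|apply Un_cv_const].
    + intros m. rewrite Hz. lra.
    + intros m _. rewrite (qR_lam1 Hl). unfold Rdiv. lra.
Qed.

End PerronFrobenius.

End Substitution.

Lemma bounds_of_common_limit n (u : nat -> nat -> R) (b U : nat -> R) s :
  (forall i, (i < n)%nat -> Un_cv (u i) s) -> Un_cv b s -> (forall m, b m <= s) ->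
  (forall m, (1 <= m)%nat -> s <= U m) ->
  (forall i, (i < n)%nat ->
     exists sl su, is_liminf (u i) sl /\ is_limsup (u i) su /\
       forall m, (1 <= m)%nat -> b m <= sl /\ sl <= su /\ su <= s /\ s <= U m) /\
  (forall i, (i < n)%nat -> Un_cv (u i) s) /\ Un_cv b s /\
  is_lub (fun x => exists m, (1 <= m)%nat /\ x = b m) s.
Proof.
  intros Hu Hb Hbs HU. split; [|split; [auto|split; [auto|split]]].
  - intros i Hi. exists s, s. split; [apply Un_cv_is_liminf; auto|].
    split; [apply Un_cv_is_limsup; auto|]. intros m Hm. repeat split; auto; lra.
  - intros x (m & _ & ->). auto.
  - intros y Hy. apply (Un_cv_le_eventually b s y 1 Hb). intros k Hk. apply Hy. eauto.
Qed.

Theorem mainTheorem8 (n : nat) (theta : nat -> list word)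
  (lam : R) (Rv : nat -> R) (s : R)
  (Hn : (1 <= n)%nat)
  (Hrs : is_random_subst n theta)
  (Hsc : semi_compatible n theta)
  (Hprim : primitive_mat n (subst_matrix theta))
  (HPF : PF_pair n (subst_matrix theta) lam Rv)
  (Hs : top_entropy n theta s) :
  (forall i, (i < n)%nat ->
     exists sl su,
       is_liminf (infl_seq theta i) sl /\ is_limsup (infl_seq theta i) su /\
       forall m, (1 <= m)%nat ->
         qR n theta Rv m / lam ^ m <= sl /\ sl <= su /\ su <= s /\
         s <= qR n theta Rv m / (lam ^ m - 1)) /\
  (forall i, (i < n)%nat -> Un_cv (infl_seq theta i) s) /\
  Un_cv (fun m => qR n theta Rv m / lam ^ m) s /\
  is_lub (fun x => exists m, (1 <= m)%nat /\ x = qR n theta Rv m / lam ^ m) s.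
Proof.
  destruct (entropy_eq_inflation_limits n theta Hrs Hsc Hn lam Rv HPF s Hprim Hs)
    as (Hinfl & Hcv & Hle & Hge).
  exact (bounds_of_common_limit n (infl_seq theta) _ _ s Hinfl Hcv Hle Hge).
Qed.
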